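(* For every $\lambda>0$ the spectral problem has a unique solution $(c(\lambda),Q_\lambda)$. The function $\lambda\mapsto c(\lambda)$ attains its minimum $c^*>0$ on $(0,\infty)$ at some $\lambda^*>0$; let $Q^*=Q_{\lambda^*}$. Moreover: (i) for every $\lambda>0$, $Q_\lambda$ is increasing on $\Theta$, and there is $\theta_0\in\overline\Theta$ with $-\lambda c(\lambda)+\lambda^2\theta_0+r=0$ such that $Q_\lambda$ is convex on $[\theta_{\min},\theta_0]$ and concave on $[\theta_0,\theta_{\max}]$; (ii) with $\langle\theta_\lambda\rangle=\int_\Theta\theta Q_\lambda(\theta)\,d\theta$, for all $\lambda>0$: $-\lambda c(\lambda)+\lambda^2\langle\theta_\lambda\rangle+r=0$ and $\langle\theta_\lambda\rangle>\frac{\theta_{\max}+\theta_{\min}}2$; (iii) with $\langle\theta^*\rangle=\langle\theta_{\lambda^*}\rangle$: $c^*>2\sqrt{r\langle\theta^*\rangle}$ and $c^*\ge\lambda^*(\theta_{\max}+\theta_{\min})$.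
   Context: $\Theta=(\theta_{\min},\theta_{\max})$ with $0<\theta_{\min}<\theta_{\max}<\infty$; $\alpha>0$, $r>0$. Spectral problem for $\lambda>0$: find $c(\lambda)\in\mathbb R$ and $Q_\lambda\in C^2(\overline\Theta)$ with $\alpha Q_\lambda''+(-\lambda c(\lambda)+\theta\lambda^2+r)Q_\lambda=0$ on $\Theta$, $Q_\lambda'(\theta_{\min})=Q_\lambda'(\theta_{\max})=0$, $Q_\lambda>0$, $\int_\Theta Q_\lambda\,d\theta=1$. *)

From Stdlib Require Import Reals Lra.
Open Scope R_scope.

Definition cont_on_closed (f : R -> R) (a b : R) : Prop :=
  forall x, a <= x <= b -> limit1_in f (fun y => a <= y <= b) (f x) x.

(* f is C^2 on [a,b] with first and second derivatives f1, f2: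
   f' = f1 and f1' = f2 on the open interval, and f, f1, f2 extend
   continuously to the closed interval (so f1 a, f1 b are the one-sided
   derivatives at the endpoints). *)
Definition C2_closed_with (f f1 f2 : R -> R) (a b : R) : Prop :=
  cont_on_closed f a b /\ cont_on_closed f1 a b /\ cont_on_closed f2 a b /\
  (forall x, a < x < b -> derivable_pt_lim f x (f1 x)) /\
  (forall x, a < x < b -> derivable_pt_lim f1 x (f2 x)).

Definition spectral_solution (alpha r tmin tmax lam c : R) (Q : R -> R) : Prop :=
  exists Q1 Q2 : R -> R,
    C2_closed_with Q Q1 Q2 tmin tmax /\
    (forall th, tmin < th < tmax ->
        alpha * Q2 th + (- lam * c + th * lam ^ 2 + r) * Q th = 0) /\
    Q1 tmin = 0 /\ Q1 tmax = 0 /\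
    (forall th, tmin <= th <= tmax -> 0 < Q th) /\
    (exists pr : Riemann_integrable Q tmin tmax, RiemannInt pr = 1).

Definition convex_on (f : R -> R) (a b : R) : Prop :=
  forall x y t, a <= x <= b -> a <= y <= b -> 0 <= t <= 1 ->
    f (t * x + (1 - t) * y) <= t * f x + (1 - t) * f y.

Definition concave_on (f : R -> R) (a b : R) : Prop :=
  forall x y t, a <= x <= b -> a <= y <= b -> 0 <= t <= 1 ->
    t * f x + (1 - t) * f y <= f (t * x + (1 - t) * y).

Definition mean_is (Q : R -> R) (tmin tmax m : R) : Prop :=
  exists pr : Riemann_integrable (fun th => th * Q th) tmin tmax, RiemannInt pr = m.

From Stdlib Require Import Reals Lra Psatz Arith Lia Classical IndefiniteDescription.
From Coquelicot Require Import Coquelicot.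
Open Scope R_scope.

(* Writing mu = lam c - r, the equation becomes
   Q'' = pot(theta) Q with pot = (mu - lam^2 theta) / alpha, and c(lam) is
   determined by a Neumann eigenvalue mu(lam).  We solve the initial value
   problem Y(tmin) = 1, Y'(tmin) = 0 by an entire power series and obtain the
   principal eigenvalue by shooting: mu(lam) is the infimum of the values for
   which Y stays positive and Y'(tmax) > 0; Gronwall-type energy estimates give
   continuous dependence on (mu, lam) and exclude double zeros.  A Wronskian
   identity between two eigenfunctions yields uniqueness, the Lipschitz
   continuity of mu, and, combined with the minimality of c at lam*, the key
   inequality c* > 2 lam* <theta*>.  The sign change of pot at mu/lam^2 gives
   monotonicity and convexity (i); integrating the equation gives the mean
   identity (ii); (iii) then follows by strict AM-GM. *)

Lemma derivable_of_is_derive f x l : is_derive f x l -> derivable_pt f x.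
Proof. intro H. exists l. now apply is_derive_Reals. Qed.

Lemma continuity_of_is_derive (f : R -> R) x l : is_derive f x l -> continuity_pt f x.
Proof. intro H. apply derivable_continuous_pt. eapply derivable_of_is_derive; exact H. Qed.

Lemma is_derive_eq (f : R -> R) x l l' : is_derive f x l -> l = l' -> is_derive f x l'.
Proof. intros H ->; exact H. Qed.

Ltac solve_ex_derive :=
  match goal with H : is_derive ?f ?x _ |- ex_derive ?g ?x => eexists; exact H end.
Ltac rw_derive :=
  repeat match goal with
  | H : is_derive ?f ?x _ |- context [Derive ?g ?x] => rewrite (is_derive_unique g x _ H)
  end.
Ltac ader := auto_derive; repeat split; try solve_ex_derive; auto; rw_derive.

(* Coquelicot states some equalities at its own algebraic structures over [R];
   [reqR] restates the goal in [R] so that [ring]/[field] apply. *)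
Ltac reqR := match goal with |- @eq _ ?a ?b => change (@eq R a b) end.

Lemma MVT_open (f df : R -> R) a b : a < b ->
  (forall x, a <= x <= b -> continuity_pt f x) ->
  (forall x, a < x < b -> is_derive f x (df x)) ->
  exists c, a < c < b /\ f b - f a = df c * (b - a).
Proof.
  intros Hab Hc Hd.
  assert (pr1 : forall c, a < c < b -> derivable_pt f c).
  { intros c Hc'. exact (derivable_of_is_derive _ _ _ (Hd c Hc')). }
  assert (pr2 : forall c, a < c < b -> derivable_pt id c).
  { intros c _. apply derivable_pt_id. }
  destruct (MVT f id a b pr1 pr2 Hab Hc) as [c [P HP]].
  { intros; apply derivable_continuous_pt, derivable_pt_id. }
  exists c; split; [exact P|].
  rewrite (derive_pt_eq_0 f c (df c) (pr1 c P)) in HP by (apply is_derive_Reals, Hd, P).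
  rewrite (derive_pt_eq_0 id c 1 (pr2 c P)) in HP by apply derivable_pt_lim_id.
  unfold id in HP. lra.
Qed.

Section Monotone.
Variables (f df : R -> R) (a b : R).
Hypothesis f_cont : forall x, a <= x <= b -> continuity_pt f x.
Hypothesis f_der : forall x, a < x < b -> is_derive f x (df x).

Lemma nonincreasing_of_deriv : a <= b -> (forall x, a < x < b -> df x <= 0) -> f b <= f a.
Proof.
  intros Hab Hn. destruct (Req_dec a b) as [->|Hne]; [lra|].
  destruct (MVT_open f df a b) as [c [Hc1 Hc2]]; auto; try lra.
  specialize (Hn c Hc1). nra.
Qed.

Lemma decreasing_of_deriv : a < b -> (forall x, a < x < b -> df x < 0) -> f b < f a.
Proof.
  intros Hab Hn. destruct (MVT_open f df a b) as [c [Hc1 Hc2]]; auto.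
  specialize (Hn c Hc1). nra.
Qed.

Lemma nondecreasing_of_deriv : a <= b -> (forall x, a < x < b -> 0 <= df x) -> f a <= f b.
Proof.
  intros Hab Hn. destruct (Req_dec a b) as [->|Hne]; [lra|].
  destruct (MVT_open f df a b) as [c [Hc1 Hc2]]; auto; try lra.
  specialize (Hn c Hc1). nra.
Qed.

Lemma increasing_of_deriv : a < b -> (forall x, a < x < b -> 0 < df x) -> f a < f b.
Proof.
  intros Hab Hn. destruct (MVT_open f df a b) as [c [Hc1 Hc2]]; auto.
  specialize (Hn c Hc1). nra.
Qed.

End Monotone.

Lemma gronwall_fwd (E dE : R -> R) (K D a b : R) : 0 < K -> 0 <= D ->
  (forall x, a <= x <= b -> continuity_pt E x) ->
  (forall x, a < x < b -> is_derive E x (dE x)) ->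
  (forall x, a < x < b -> dE x <= K * E x + D) ->
  forall x, a <= x <= b -> E x <= (E a + D / K) * exp (K * (x - a)).
Proof.
  intros HK HD Hc Hd Hb x Hx.
  (* (E + D/K) e^{-K(t-a)} is nonincreasing *)
  set (g := fun t => (E t + D / K) * exp (- (K * (t - a)))).
  assert (Hg : g x <= g a).
  { apply (nonincreasing_of_deriv g (fun t => (dE t - K * E t - D) * exp (- (K * (t - a))))); try lra.
    - intros t Ht. unfold g. apply continuity_pt_mult.
      + apply continuity_pt_plus; [apply Hc; lra| apply continuity_pt_const; intros ??; reflexivity].
      + apply (continuity_of_is_derive _ _ (- K * exp (- (K * (t - a))))). ader. unfold Rminus; ring.
    - intros t Ht. unfold g. specialize (Hd t ltac:(lra)). ader. unfold Rminus; field. lra.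
    - intros t Ht. specialize (Hb t ltac:(lra)).
      assert (0 < exp (- (K * (t - a)))) by apply exp_pos. nra. }
  unfold g in Hg. replace (a - a) with 0 in Hg by ring.
  rewrite Rmult_0_r, Ropp_0, exp_0, Rmult_1_r in Hg.
  assert (Hp : exp (- (K * (x - a))) * exp (K * (x - a)) = 1).
  { rewrite <- exp_plus. replace (_ + _) with 0 by ring. apply exp_0. }
  assert (0 < exp (K * (x - a))) by apply exp_pos.
  assert (0 <= D / K) by (apply Rdiv_le_0_compat; lra).
  assert (E x + D / K <= (E a + D / K) * exp (K * (x - a))).
  { apply Rmult_le_compat_r with (r := exp (K * (x - a))) in Hg; [|lra].
    rewrite Rmult_assoc, Hp, Rmult_1_r in Hg. exact Hg. }
  lra.
Qed.

Lemma gronwall_bwd (E dE : R -> R) (K a b : R) :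
  (forall x, a <= x <= b -> continuity_pt E x) ->
  (forall x, a < x < b -> is_derive E x (dE x)) ->
  (forall x, a < x < b -> - K * E x <= dE x) ->
  forall x, a <= x <= b -> E x * exp (K * x) <= E b * exp (K * b).
Proof.
  intros Hc Hd Hb x Hx.
  apply (nondecreasing_of_deriv (fun t => E t * exp (K * t))
           (fun t => (dE t + K * E t) * exp (K * t)) x b); try lra.
  - intros t Ht. apply continuity_pt_mult; [apply Hc; lra|].
    apply (continuity_of_is_derive _ _ (K * exp (K * t))). ader. ring.
  - intros t Ht. specialize (Hd t ltac:(lra)). ader. ring.
  - intros t Ht. specialize (Hb t ltac:(lra)).
    assert (0 < exp (K * t)) by apply exp_pos. apply Rmult_le_pos; lra.
Qed.

Lemma lt_div_of_mul_lt a J N : 0 < N -> a * N < J -> a < J / N.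
Proof.
  intros HN H. apply (Rmult_lt_reg_r N); [exact HN|].
  unfold Rdiv. rewrite Rmult_assoc, Rinv_l, Rmult_1_r by lra. exact H.
Qed.

Lemma div_lt_of_lt_mul b J N : 0 < N -> J < b * N -> J / N < b.
Proof.
  intros HN H. apply (Rmult_lt_reg_r N); [exact HN|].
  unfold Rdiv. rewrite Rmult_assoc, Rinv_l, Rmult_1_r by lra. exact H.
Qed.

Lemma pos_of_no_zero (f : R -> R) a b : (forall x, continuity_pt f x) -> 0 < f a ->
  (forall x, a <= x <= b -> f x <> 0) -> forall x, a <= x <= b -> 0 < f x.
Proof.
  intros Hc Ha Hz x Hx. destruct (Rlt_dec 0 (f x)) as [|Hn]; [assumption|exfalso].
  assert (Hneg : f x < 0) by (pose proof (Hz x Hx); lra).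
  assert (Hax : a < x) by (destruct (Req_dec a x) as [<-|]; lra).
  destruct (IVT (fun t => - f t) a x) as [z [Hz1 Hz2]]; try lra.
  - intro t. apply continuity_pt_opp, Hc.
  - apply (Hz z); lra.
Qed.

Lemma cont_pos_near (f : R -> R) x : continuity_pt f x -> 0 < f x ->
  exists d, 0 < d /\ forall y, Rabs (y - x) < d -> 0 < f y.
Proof.
  intros Hc Hp. destruct (Hc (f x) Hp) as [d [Hd H]].
  exists d; split; [lra|]. intros y Hy.
  destruct (Req_dec y x) as [->|Hne]; [lra|].
  assert (Hl : R_dist (f y) (f x) < f x) by (apply H; split; [split; [exact I| auto]| exact Hy]).
  unfold R_dist in Hl. apply Rabs_def2 in Hl. lra.
Qed.

Lemma deriv_at_interior_min (f f1 : R -> R) a b c : (forall x, is_derive f x (f1 x)) ->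
  a < c < b -> (forall x, a <= x <= b -> f c <= f x) -> f1 c = 0.
Proof.
  intros Hd Hc Hmin. assert (pr := derivable_of_is_derive _ _ _ (Hd c)).
  rewrite <- (derive_pt_eq_0 _ _ _ pr (proj1 (is_derive_Reals _ _ _) (Hd c))).
  apply (deriv_minimum _ a b); try lra. intros x Hx1 Hx2. apply Hmin. lra.
Qed.

Lemma deriv_at_right_min (f f1 : R -> R) a b : a < b -> (forall x, is_derive f x (f1 x)) ->
  continuity_pt f1 b -> (forall x, a <= x <= b -> f b <= f x) -> f1 b <= 0.
Proof.
  intros Hab Hd Hc Hmin. destruct (Rle_lt_dec (f1 b) 0) as [|Hpos]; [assumption|exfalso].
  destruct (cont_pos_near f1 b Hc Hpos) as [d [Hd0 Hnear]].
  set (x0 := Rmax a (b - d / 2)).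
  assert (Hx0 : a <= x0 < b) by (unfold x0; split; [apply Rmax_l| apply Rmax_lub_lt; lra]).
  assert (Hx0d : b - d / 2 <= x0) by apply Rmax_r.
  destruct (MVT_open f f1 x0 b) as [c [Hc1 Hc2]]; try lra.
  - intros x _. eapply continuity_of_is_derive, Hd.
  - intros x _. apply Hd.
  - assert (0 < f1 c) by (apply Hnear; rewrite Rabs_left; lra).
    pose proof (Hmin x0 ltac:(lra)). nra.
Qed.

Lemma exists_inf (E : R -> Prop) b : (exists x, E x) -> (forall x, E x -> b <= x) ->
  exists m, (forall x, E x -> m <= x) /\ (forall e, 0 < e -> exists x, E x /\ x < m + e).
Proof.
  intros Hne Hb.
  destruct (completeness (fun x => E (- x))) as [M [HM1 HM2]].
  - exists (- b). intros x Hx. specialize (Hb _ Hx). lra.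
  - destruct Hne as [x Hx]. exists (- x). rewrite Ropp_involutive. exact Hx.
  - exists (- M). split.
    + intros x Hx. assert (E (- - x)) by (rewrite Ropp_involutive; exact Hx).
      specialize (HM1 _ H). lra.
    + intros e He. apply NNPP. intro Hn.
      assert (is_upper_bound (fun x => E (- x)) (M - e)).
      { intros x Hx. destruct (Rle_dec x (M - e)); auto. exfalso. apply Hn.
        exists (- x). split; [exact Hx| lra]. }
      specialize (HM2 _ H). lra.
Qed.

Lemma small_tolerance G e : 0 < G -> 0 < e -> exists eta, 0 < eta <= 1 /\ eta * eta * G < e * e.
Proof.
  intros HG He. set (eta := Rmin 1 (e / (G + 1))).
  assert (H1 : eta <= 1) by apply Rmin_l.
  assert (H2 : eta * (G + 1) <= e).
  { assert (eta <= e / (G + 1)) by apply Rmin_r.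
    apply (Rmult_le_compat_r (G + 1)) in H; [|lra].
    unfold Rdiv in H. rewrite Rmult_assoc, Rinv_l, Rmult_1_r in H by lra. exact H. }
  assert (Hp : 0 < eta) by (apply Rmin_glb_lt; [lra| apply Rdiv_lt_0_compat; lra]).
  assert (HeG : eta * G < e) by nra.
  assert (eta * (eta * G) <= e * (eta * G)) by (apply Rmult_le_compat_r; nra).
  exists eta. split; [lra|]. nra.
Qed.

Lemma continuity_pt_of_eps (f : R -> R) x :
  (forall e, 0 < e -> exists d, 0 < d /\ forall y, Rabs (y - x) < d -> Rabs (f y - f x) < e) ->
  continuity_pt f x.
Proof.
  intros H e He. destruct (H e He) as [d [Hd Hy]].
  exists d; split; [exact Hd|]. intros y [_ Hyd]. apply Hy, Hyd.
Qed.

Lemma nonpos_of_left_nonpos (F : R -> R) x0 d0 : continuity_pt F x0 -> 0 < d0 ->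
  (forall x, x0 - d0 < x < x0 -> F x <= 0) -> F x0 <= 0.
Proof.
  intros Hc Hd0 Hleft. destruct (Rle_lt_dec (F x0) 0) as [|Hpos]; [assumption|exfalso].
  destruct (cont_pos_near F x0 Hc Hpos) as [d [Hd Hnear]].
  set (x := x0 - Rmin d d0 / 2).
  assert (Hm1 := Rmin_l d d0). assert (Hm2 := Rmin_r d d0).
  assert (Hm0 : 0 < Rmin d d0) by (apply Rmin_glb_lt; lra).
  assert (0 < F x) by (apply Hnear; unfold x; rewrite Rabs_left; lra).
  assert (F x <= 0) by (apply Hleft; unfold x; lra). lra.
Qed.

Lemma speed_gt_sqrt c l m r : 0 < l -> 0 < m -> 0 < r -> - l * c + l ^ 2 * m + r = 0 ->
  c > 2 * l * m -> c > 2 * sqrt (r * m).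
Proof.
  intros Hl Hm Hr E H.
  assert (Hrm : 0 <= r * m) by (apply Rmult_le_pos; lra).
  pose proof (sqrt_sqrt _ Hrm) as Hs. pose proof (sqrt_pos (r * m)) as Hs0.
  (* c^2 - 4 r m = (c - 2 l m)^2 > 0 *)
  assert (Hsq : 4 * (r * m) < c * c).
  { replace r with (l * c - l ^ 2 * m) by lra.
    assert (0 < (c - 2 * l * m) * (c - 2 * l * m)) by (apply Rmult_lt_0_compat; lra). nra. }
  assert (Hc : 0 < c) by nra.
  rewrite <- Hs in Hsq. nra.
Qed.

Lemma cross_term_bound a b q : 2 * b * (q * a) <= Rabs q * (a * a + b * b).
Proof.
  destruct (Rle_dec 0 q).
  - rewrite Rabs_right by lra. assert (0 <= q * ((a - b) * (a - b))) by
      (apply Rmult_le_pos; [lra| apply Rle_0_sqr]). lra.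
  - rewrite Rabs_left by lra. assert (0 <= - q * ((a + b) * (a + b))) by
      (apply Rmult_le_pos; [lra| apply Rle_0_sqr]). lra.
Qed.

Section Energy.
Variables (f f1 q h : R -> R) (P a b : R).
Hypothesis P_ge0 : 0 <= P.
Hypothesis f_cont : forall x, a <= x <= b -> continuity_pt f x.
Hypothesis f1_cont : forall x, a <= x <= b -> continuity_pt f1 x.
Hypothesis f_der : forall x, a < x < b -> is_derive f x (f1 x).
Hypothesis f1_der : forall x, a < x < b -> is_derive f1 x (q x * f x + h x).
Hypothesis q_bound : forall x, a < x < b -> Rabs (q x) <= P.

Let E x := f x * f x + f1 x * f1 x.
Let dE x := 2 * f x * f1 x + 2 * f1 x * (q x * f x + h x).

Let E_cont x : a <= x <= b -> continuity_pt E x.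
Proof. intro Hx. unfold E. apply continuity_pt_plus; apply continuity_pt_mult; auto. Qed.

Let E_der x : a < x < b -> is_derive E x (dE x).
Proof. intro Hx. pose proof (f_der x Hx); pose proof (f1_der x Hx). unfold E, dE. ader. ring. Qed.

Lemma energy_growth (D : R) : 0 <= D -> (forall x, a < x < b -> h x * h x <= D) ->
  forall x, a <= x <= b ->
    f x * f x + f1 x * f1 x <=
      (f a * f a + f1 a * f1 a + D / (2 + P)) * exp ((2 + P) * (x - a)).
Proof.
  intros HD Hh.
  apply (gronwall_fwd E dE); [lra| exact HD| exact E_cont| exact E_der|].
  intros x Hx. unfold E, dE.
  pose proof (cross_term_bound (f x) (f1 x) (q x)).
  pose proof (q_bound x Hx); pose proof (Hh x Hx).
  assert (0 <= f x * f x + f1 x * f1 x) by nra.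
  assert (Rabs (q x) * (f x * f x + f1 x * f1 x) <= P * (f x * f x + f1 x * f1 x)) by
    (apply Rmult_le_compat_r; lra).
  pose proof (Rle_0_sqr (f x - f1 x)); pose proof (Rle_0_sqr (f1 x - h x)).
  pose proof (Rle_0_sqr (f x)). unfold Rsqr in *. lra.
Qed.

Lemma energy_decay : (forall x, a < x < b -> h x = 0) ->
  forall x, a <= x <= b ->
    (f x * f x + f1 x * f1 x) * exp ((1 + P) * x) <=
      (f b * f b + f1 b * f1 b) * exp ((1 + P) * b).
Proof.
  intros Hh.
  apply (gronwall_bwd E dE); [exact E_cont| exact E_der|].
  intros x Hx. unfold E, dE. rewrite Hh by exact Hx.
  pose proof (cross_term_bound (- f x) (f1 x) (q x)).
  pose proof (q_bound x Hx).
  assert (0 <= f x * f x + f1 x * f1 x) by nra.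
  assert (Rabs (q x) * (f x * f x + f1 x * f1 x) <= P * (f x * f x + f1 x * f1 x)) by
    (apply Rmult_le_compat_r; lra).
  pose proof (Rle_0_sqr (f x + f1 x)); unfold Rsqr in *. lra.
Qed.

End Energy.

Lemma ivp_zero (f f1 q : R -> R) (P a b : R) : 0 <= P ->
  (forall x, a <= x <= b -> continuity_pt f x) ->
  (forall x, a <= x <= b -> continuity_pt f1 x) ->
  (forall x, a < x < b -> is_derive f x (f1 x)) ->
  (forall x, a < x < b -> is_derive f1 x (q x * f x)) ->
  (forall x, a < x < b -> Rabs (q x) <= P) ->
  f a = 0 -> f1 a = 0 -> forall x, a <= x <= b -> f x = 0 /\ f1 x = 0.
Proof.
  intros HP Hc Hc1 Hd Hd1 Hq Ha Ha1 x Hx.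
  assert (HE := energy_growth f f1 q (fun _ => 0) P a b HP Hc Hc1 Hd
                  ltac:(intros y Hy; rewrite Rplus_0_r; auto) Hq 0 (Rle_refl 0)
                  ltac:(intros; lra) x Hx).
  rewrite Ha, Ha1 in HE. replace (0 * 0 + 0 * 0 + 0 / (2 + P)) with 0 in HE by (field; lra).
  rewrite Rmult_0_l in HE. pose proof (Rle_0_sqr (f x)); pose proof (Rle_0_sqr (f1 x)).
  unfold Rsqr in *. split; nra.
Qed.

Lemma convex_of_deriv (f df : R -> R) a b : (forall x, is_derive f x (df x)) ->
  (forall x y, a <= x -> x <= y -> y <= b -> df x <= df y) -> convex_on f a b.
Proof.
  intros Hd Hm.
  assert (Hc : forall u, continuity_pt f u) by (intro u; eapply continuity_of_is_derive, Hd).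
  (* by symmetry of the convexity inequality we may assume x <= y *)
  assert (Hle : forall x y t, a <= x -> x <= y -> y <= b -> 0 <= t <= 1 ->
            f (t * x + (1 - t) * y) <= t * f x + (1 - t) * f y).
  { intros x y t Hx Hxy Hy Ht. set (z := t * x + (1 - t) * y).
    assert (Hz : x <= z <= y) by (unfold z; nra).
    destruct (MVT_gen f x z df) as [c1 [Hc1 E1]]; [intros; apply Hd| intros; apply Hc|].
    destruct (MVT_gen f z y df) as [c2 [Hc2 E2]]; [intros; apply Hd| intros; apply Hc|].
    rewrite Rmin_left, Rmax_right in Hc1, Hc2 by lra.
    assert (df c1 <= df c2) by (apply Hm; lra).
    (* the gap is t (1-t) (y-x) (df c2 - df c1) >= 0 *)
    assert (Heq : t * f x + (1 - t) * f y - f z = t * (1 - t) * ((y - x) * (df c2 - df c1))).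
    { replace (t * f x + (1 - t) * f y - f z) with (- t * (f z - f x) + (1 - t) * (f y - f z)) by ring.
      rewrite E1, E2. unfold z. ring. }
    assert (0 <= t * (1 - t)) by nra.
    assert (0 <= (y - x) * (df c2 - df c1)) by nra. nra. }
  intros x y t Hx Hy Ht. destruct (Rle_dec x y) as [Hxy|Hxy].
  - apply Hle; lra.
  - replace (t * x + (1 - t) * y) with ((1 - t) * y + (1 - (1 - t)) * x) by ring.
    replace (t * f x + (1 - t) * f y) with ((1 - t) * f y + (1 - (1 - t)) * f x) by ring.
    apply Hle; lra.
Qed.

Lemma concave_of_deriv (f df : R -> R) a b : (forall x, is_derive f x (df x)) ->
  (forall x y, a <= x -> x <= y -> y <= b -> df y <= df x) -> concave_on f a b.
Proof.
  intros Hd Hm x y t Hx Hy Ht.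
  assert (Hc : convex_on (fun u => - f u) a b).
  { apply (convex_of_deriv _ (fun u => - df u)).
    - intro u. apply (is_derive_opp f u (df u)); auto.
    - intros u v H1 H2 H3. specialize (Hm u v H1 H2 H3). lra. }
  specialize (Hc x y t Hx Hy Ht). simpl in Hc. lra.
Qed.

Lemma convex_on_div (f : R -> R) N a b : 0 < N -> convex_on f a b -> convex_on (fun t => f t / N) a b.
Proof.
  intros HN H x y t Hx Hy Ht. specialize (H x y t Hx Hy Ht).
  replace (t * (f x / N) + (1 - t) * (f y / N)) with ((t * f x + (1 - t) * f y) / N) by (field; lra).
  unfold Rdiv. apply Rmult_le_compat_r; [left; apply Rinv_0_lt_compat; lra| exact H].
Qed.

Lemma concave_on_div (f : R -> R) N a b : 0 < N -> concave_on f a b -> concave_on (fun t => f t / N) a b.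
Proof.
  intros HN H x y t Hx Hy Ht. specialize (H x y t Hx Hy Ht).
  replace (t * (f x / N) + (1 - t) * (f y / N)) with ((t * f x + (1 - t) * f y) / N) by (field; lra).
  unfold Rdiv. apply Rmult_le_compat_r; [left; apply Rinv_0_lt_compat; lra| exact H].
Qed.

Definition cont_R (f : R -> R) := forall x, continuity_pt f x.

Lemma cont_R_mult f g : cont_R f -> cont_R g -> cont_R (fun x => f x * g x).
Proof. intros Hf Hg x. apply continuity_pt_mult; auto. Qed.
Lemma cont_R_plus f g : cont_R f -> cont_R g -> cont_R (fun x => f x + g x).
Proof. intros Hf Hg x. apply continuity_pt_plus; auto. Qed.
Lemma cont_R_minus f g : cont_R f -> cont_R g -> cont_R (fun x => f x - g x).
Proof. intros Hf Hg x. apply continuity_pt_minus; auto. Qed.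
Lemma cont_R_const c : cont_R (fun _ => c).
Proof. intros x. apply continuity_pt_const. intros ??; reflexivity. Qed.
Lemma cont_R_id : cont_R (fun x => x).
Proof. intros x. apply derivable_continuous_pt, derivable_pt_id. Qed.

Lemma ex_RInt_cont (f : R -> R) a b : cont_R f -> ex_RInt f a b.
Proof.
  intro H. apply (ex_RInt_continuous (V := R_CompleteNormedModule)).
  intros z _. apply continuity_pt_filterlim, H.
Qed.

Lemma RInt_gt0 (f : R -> R) a b : a < b -> cont_R f -> (forall x, a < x < b -> 0 < f x) ->
  0 < RInt f a b.
Proof.
  intros Hab Hc Hp. apply RInt_gt_0; auto.
  intros x _. apply continuity_pt_filterlim, Hc.
Qed.

Lemma RInt_lin (f g : R -> R) c1 c2 a b : ex_RInt f a b -> ex_RInt g a b ->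
  RInt (fun x => c1 * f x + c2 * g x) a b = c1 * RInt f a b + c2 * RInt g a b.
Proof.
  intros Hf Hg.
  transitivity (RInt (fun x => plus (scal c1 (f x)) (scal c2 (g x))) a b); [reflexivity|].
  rewrite (RInt_plus (V:=R_CompleteNormedModule)).
  - rewrite !(RInt_scal (V:=R_CompleteNormedModule)) by auto. reflexivity.
  - apply (ex_RInt_scal (V:=R_CompleteNormedModule)); auto.
  - apply (ex_RInt_scal (V:=R_CompleteNormedModule)); auto.
Qed.

Lemma RInt_lin3 (f g h : R -> R) c1 c2 c3 a b : cont_R f -> cont_R g -> cont_R h ->
  RInt (fun x => c1 * f x + c2 * g x + c3 * h x) a b =
  c1 * RInt f a b + c2 * RInt g a b + c3 * RInt h a b.
Proof.
  intros Hf Hg Hh.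
  rewrite (RInt_ext _ (fun x => 1 * (c1 * f x + c2 * g x) + c3 * h x)) by (intros; reqR; ring).
  rewrite RInt_lin by (apply ex_RInt_cont; auto using cont_R_plus, cont_R_mult, cont_R_const).
  rewrite RInt_lin by (apply ex_RInt_cont; auto). reqR; ring.
Qed.

Lemma RInt_scal_l (f : R -> R) c a b : ex_RInt f a b -> RInt (fun x => c * f x) a b = c * RInt f a b.
Proof.
  intro H. transitivity (RInt (fun x => scal c (f x)) a b); [reflexivity|].
  rewrite (RInt_scal (V:=R_CompleteNormedModule)) by auto. reflexivity.
Qed.

Lemma RInt_div (f : R -> R) c a b : ex_RInt f a b -> RInt (fun t => f t / c) a b = RInt f a b / c.
Proof.
  intros H. rewrite (RInt_ext _ (fun t => / c * f t)) by (intros; reqR; unfold Rdiv; ring).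
  rewrite RInt_scal_l by auto. unfold Rdiv; reqR; ring.
Qed.

Lemma RInt_deriv (F f : R -> R) a b : (forall x, is_derive F x (f x)) -> cont_R f ->
  RInt f a b = F b - F a.
Proof.
  intros Hd Hc. apply (is_RInt_unique (V:=R_CompleteNormedModule)).
  apply (is_RInt_derive (V:=R_CompleteNormedModule) F f a b); intros; auto.
  apply continuity_pt_filterlim, Hc.
Qed.

Lemma RInt_centered a b : RInt (fun t => t - (a + b) / 2) a b = 0.
Proof.
  rewrite (RInt_deriv (fun t => (t - (a + b) / 2) * (t - (a + b) / 2) / 2)).
  - reqR. field.
  - intro x. auto_derive; auto. reqR. field.
  - apply cont_R_minus; [apply cont_R_id| apply cont_R_const].
Qed.

(* Chebyshev-type positivity: for Y strictly increasing and a positive weight g,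
   (x - m)(Y x - Y m) is positive off m, hence so is its weighted integral. *)
Lemma RInt_monotone_cross_pos (Y g : R -> R) a b m : a < m < b -> cont_R Y -> cont_R g ->
  (forall x y, a <= x -> x < y -> y <= b -> Y x < Y y) ->
  (forall x, a <= x <= b -> 0 < g x) ->
  0 < RInt (fun x => (x - m) * (Y x - Y m) * g x) a b.
Proof.
  intros Hm HY Hg Hinc Hgp.
  set (F := fun x => (x - m) * (Y x - Y m) * g x).
  assert (HF : cont_R F).
  { unfold F. repeat apply cont_R_mult; auto; apply cont_R_minus; auto using cont_R_id, cont_R_const. }
  rewrite <- (RInt_Chasles (V:=R_CompleteNormedModule) F a m b) by (apply ex_RInt_cont; auto).
  assert (0 < RInt F a m).
  { apply RInt_gt0; [lra|auto|]. intros x Hx. unfold F.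
    pose proof (Hinc x m ltac:(lra) ltac:(lra) ltac:(lra)). pose proof (Hgp x ltac:(lra)).
    apply Rmult_lt_0_compat; [nra|lra]. }
  assert (0 < RInt F m b).
  { apply RInt_gt0; [lra|auto|]. intros x Hx. unfold F.
    pose proof (Hinc m x ltac:(lra) ltac:(lra) ltac:(lra)). pose proof (Hgp x ltac:(lra)).
    apply Rmult_lt_0_compat; [nra|lra]. }
  unfold plus; simpl. lra.
Qed.

Lemma RInt_affine_zero (g : R -> R) c0 c1 k a b : k <> 0 -> cont_R g ->
  RInt (fun t => (c0 - c1 * t) / k * g t) a b = 0 ->
  c0 * RInt g a b = c1 * RInt (fun t => t * g t) a b.
Proof.
  intros Hk Hg H0.
  rewrite (RInt_ext _ (fun t => (c0 / k) * g t + (- c1 / k) * (t * g t))) in H0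
    by (intros; reqR; field; exact Hk).
  rewrite RInt_lin in H0 by (apply ex_RInt_cont; auto using cont_R_mult, cont_R_id).
  apply (Rmult_eq_compat_l k) in H0.
  replace (k * (c0 / k * RInt g a b + - c1 / k * RInt (fun t => t * g t) a b))
    with (c0 * RInt g a b - c1 * RInt (fun t => t * g t) a b) in H0 by (field; exact Hk).
  lra.
Qed.

Lemma weighted_mean_bounds (w : R -> R) a b : a < b -> cont_R w ->
  (forall x, a < x < b -> 0 < w x) ->
  a * RInt w a b < RInt (fun t => t * w t) a b < b * RInt w a b.
Proof.
  intros Hab Hw Hpos.
  assert (Hex : ex_RInt w a b) by (apply ex_RInt_cont; auto).
  assert (Hext : ex_RInt (fun t => t * w t) a b) by (apply ex_RInt_cont, cont_R_mult; auto using cont_R_id).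
  split.
  - assert (H : 0 < RInt (fun t => 1 * (t * w t) + (- a) * w t) a b).
    { apply RInt_gt0; auto.
      - apply cont_R_plus; apply cont_R_mult; auto using cont_R_const, cont_R_mult, cont_R_id.
      - intros x Hx. pose proof (Hpos x Hx). nra. }
    rewrite RInt_lin in H by auto. lra.
  - assert (H : 0 < RInt (fun t => (-1) * (t * w t) + b * w t) a b).
    { apply RInt_gt0; auto.
      - apply cont_R_plus; apply cont_R_mult; auto using cont_R_const, cont_R_mult, cont_R_id.
      - intros x Hx. pose proof (Hpos x Hx). nra. }
    rewrite RInt_lin in H by auto. lra.
Qed.

Lemma mean_gt_midpoint (Y : R -> R) a b : a < b -> cont_R Y ->
  (forall x y, a <= x -> x < y -> y <= b -> Y x < Y y) ->
  (a + b) / 2 * RInt Y a b < RInt (fun t => t * Y t) a b.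
Proof.
  intros Hab HY Hinc.
  assert (H := RInt_monotone_cross_pos Y (fun _ => 1) a b ((a + b) / 2) ltac:(lra) HY
                 (cont_R_const 1) Hinc ltac:(intros; lra)).
  rewrite (RInt_ext _ (fun t => 1 * (t * Y t) + (- ((a + b) / 2)) * Y t
                                + (- Y ((a + b) / 2)) * (t - (a + b) / 2))) in H by (intros; reqR; ring).
  rewrite RInt_lin3, RInt_centered in H;
    auto using cont_R_mult, cont_R_id, cont_R_minus, cont_R_const.
  lra.
Qed.

Lemma mean_sq_gt_mean (Y : R -> R) a b : a < b -> cont_R Y ->
  (forall x y, a <= x -> x < y -> y <= b -> Y x < Y y) -> (forall x, a <= x <= b -> 0 < Y x) ->
  RInt (fun t => t * Y t) a b / RInt Y a b * RInt (fun t => Y t * Y t) a b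
    < RInt (fun t => t * (Y t * Y t)) a b.
Proof.
  intros Hab HY Hinc Hpos.
  assert (HN : 0 < RInt Y a b) by (apply RInt_gt0; auto; intros; apply Hpos; lra).
  set (m := RInt (fun t => t * Y t) a b / RInt Y a b).
  assert (Hm := weighted_mean_bounds Y a b Hab HY ltac:(intros; apply Hpos; lra)).
  assert (Hma : a < m < b).
  { unfold m. split; [apply lt_div_of_mul_lt| apply div_lt_of_lt_mul]; lra. }
  assert (HmN : @eq R (RInt (fun t => t * Y t) a b) (m * RInt Y a b))
    by (unfold m, Rdiv; rewrite Rmult_assoc, Rinv_l, Rmult_1_r by lra; reflexivity).
  assert (H := RInt_monotone_cross_pos Y Y a b m Hma HY HY Hinc Hpos).
  rewrite (RInt_ext _ (fun x => 1 * (x * (Y x * Y x)) + (- m) * (Y x * Y x)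
                 + (- Y m) * (1 * (x * Y x) + (- m) * Y x))) in H by (intros; reqR; ring).
  rewrite RInt_lin3 in H;
    auto using cont_R_mult, cont_R_id, cont_R_plus, cont_R_const.
  rewrite RInt_lin, HmN in H by (apply ex_RInt_cont; auto using cont_R_mult, cont_R_id).
  lra.
Qed.

Lemma RInt_close (f g : R -> R) a b M : a <= b -> cont_R f -> cont_R g ->
  (forall t, a <= t <= b -> Rabs (f t - g t) <= M) ->
  Rabs (RInt f a b - RInt g a b) <= (b - a) * M.
Proof.
  intros Hab Hf Hg HM.
  replace (RInt f a b - RInt g a b) with (1 * RInt f a b + (-1) * RInt g a b) by ring.
  rewrite <- RInt_lin by (apply ex_RInt_cont; auto).
  apply abs_RInt_le_const; auto.
  - apply ex_RInt_cont, cont_R_plus; apply cont_R_mult; auto using cont_R_const.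
  - intros t Ht. replace (1 * f t + -1 * g t) with (f t - g t) by ring. auto.
Qed.

Lemma RiemannInt_of_cont (f : R -> R) a b : cont_R f ->
  exists pr : Riemann_integrable f a b, RiemannInt pr = RInt f a b.
Proof.
  intros Hf. exists (ex_RInt_Reals_0 _ _ _ (ex_RInt_cont f a b Hf)).
  rewrite <- RInt_Reals. reflexivity.
Qed.

(** Functions given only on [a,b]: the clamped extension  f (clamp a b t)
    is continuous on R and has the same interior derivatives. *)

Definition clamp a b x := Rmax a (Rmin b x).

Lemma clamp_in a b x : a <= x <= b -> clamp a b x = x.
Proof. intros H. unfold clamp. rewrite Rmin_right, Rmax_right by lra. reflexivity. Qed.

Lemma clamp_range a b x : a <= b -> a <= clamp a b x <= b.
Proof. intros H. unfold clamp. split; [apply Rmax_l|]. apply Rmax_lub; [lra| apply Rmin_l]. Qed.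

Lemma clamp_lip a b x y : a <= x <= b -> Rabs (clamp a b y - x) <= Rabs (y - x).
Proof.
  intros Hx. unfold clamp.
  destruct (Rle_dec y b) as [Hyb|Hyb].
  - rewrite Rmin_right by lra. destruct (Rle_dec a y) as [Hay|Hay].
    + rewrite Rmax_right by lra. lra.
    + rewrite Rmax_left by lra. rewrite !Rabs_left1 by lra. lra.
  - rewrite Rmin_left, Rmax_right by lra. rewrite !Rabs_right by lra. lra.
Qed.

Lemma clamp_cont (f : R -> R) a b x : a <= x <= b -> cont_on_closed f a b ->
  continuity_pt (fun t => f (clamp a b t)) x.
Proof.
  intros Hx Hf e He. destruct (Hf x Hx e He) as [d [Hd H]].
  exists d; split; [exact Hd|]. intros y [_ Hy].
  simpl in *. unfold R_dist in *. rewrite (clamp_in a b x Hx).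
  apply H. split.
  - apply clamp_range; lra.
  - simpl. unfold R_dist. eapply Rle_lt_trans; [apply clamp_lip; exact Hx| exact Hy].
Qed.

Lemma clamp_der (f : R -> R) a b x l : a < x < b -> derivable_pt_lim f x l ->
  is_derive (fun t => f (clamp a b t)) x l.
Proof.
  intros Hx Hd. apply (is_derive_ext_loc f); [| apply is_derive_Reals; exact Hd].
  assert (Hp : 0 < Rmin (x - a) (b - x)) by (apply Rmin_glb_lt; lra).
  exists (mkposreal _ Hp). intros y Hy. simpl in Hy.
  unfold ball in Hy; simpl in Hy; unfold AbsRing_ball, abs, minus, plus, opp in Hy; simpl in Hy.
  assert (H1 := Rmin_l (x - a) (b - x)). assert (H2 := Rmin_r (x - a) (b - x)).
  apply Rabs_def2 in Hy. rewrite clamp_in; [reflexivity| lra].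
Qed.

Lemma cont_on_closed_of_cont_R (f : R -> R) a b : cont_R f -> cont_on_closed f a b.
Proof.
  intros Hc x Hx e He. destruct (Hc x e He) as [d [Hd H]].
  exists d; split; [exact Hd|]. intros y [_ Hy].
  destruct (Req_dec y x) as [->|Hne].
  - simpl. unfold R_dist. rewrite Rminus_eq_0, Rabs_R0. lra.
  - apply H. split; [split; [exact I| auto]| exact Hy].
Qed.

(** An entire solution of  y'' = (A - B x) y,  y(0) = 1,  y'(0) = 0,
    as the power series  sum_n c_n x^n  with
    c_0 = 1, c_1 = 0, c_2 = A/2,  (n+3)(n+2) c_(n+3) = A c_(n+1) - B c_n. *)

(* [coef_triple A B n] is (c_n, c_(n+1), c_(n+2)). *)
Fixpoint coef_triple (A B : R) (n : nat) : R * R * R :=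
  match n with
  | O => (1, 0, A / 2)
  | S m => let '(x, y, z) := coef_triple A B m in
           (y, z, (A * y - B * x) / ((INR m + 3) * (INR m + 2)))
  end.

Definition coef A B n := fst (fst (coef_triple A B n)).

Lemma coef_triple_eq A B n :
  coef_triple A B n = (coef A B n, coef A B (S n), coef A B (S (S n))).
Proof.
  induction n as [|n IH]; [reflexivity|].
  unfold coef at 2 3. simpl coef_triple at 2 3. rewrite IH. simpl.
  unfold coef at 1. simpl. rewrite IH. reflexivity.
Qed.

Lemma coef_rec A B n : coef A B (S (S (S n))) =
  (A * coef A B (S n) - B * coef A B n) / ((INR n + 3) * (INR n + 2)).
Proof. unfold coef at 1. simpl coef_triple. rewrite coef_triple_eq. reflexivity. Qed.

Fixpoint run_max (c : nat -> R) (n : nat) : R :=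
  match n with O => c O | S k => Rmax (run_max c k) (c (S k)) end.

Lemma run_max_ge c n k : (k <= n)%nat -> c k <= run_max c n.
Proof.
  induction n as [|n IH]; intros Hk.
  - replace k with O by lia. simpl; lra.
  - destruct (Nat.eq_dec k (S n)) as [->|Hne]; simpl; [apply Rmax_r|].
    eapply Rle_trans; [apply IH; lia| apply Rmax_l].
Qed.

Lemma bounded_of_window (q : nat -> R) N :
  (forall n, (N <= n)%nat -> q (S (S (S n))) <= Rmax (q n) (Rmax (q (S n)) (q (S (S n))))) ->
  exists M, forall n, q n <= M.
Proof.
  intros Hq.
  set (c := fun n => Rmax (q n) (Rmax (q (S n)) (q (S (S n))))).
  assert (Hstep : forall n, (N <= n)%nat -> c (S n) <= c n).
  { intros n Hn. unfold c. apply Rmax_lub; [|apply Rmax_lub; [|apply Hq; lia]].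
    - eapply Rle_trans; [apply Rmax_l| apply Rmax_r].
    - eapply Rle_trans; [apply Rmax_r| apply Rmax_r]. }
  exists (run_max c N). intro n.
  assert (Hcn : c n <= run_max c N).
  { destruct (le_lt_dec n N) as [Hle|Hlt]; [apply run_max_ge; exact Hle|].
    replace n with (N + (n - N))%nat by lia.
    induction (n - N)%nat as [|k IH].
    - rewrite Nat.add_0_r; apply run_max_ge; lia.
    - rewrite Nat.add_succ_r. eapply Rle_trans; [apply Hstep; lia| exact IH]. }
  eapply Rle_trans; [| exact Hcn]. apply Rmax_l.
Qed.

(* The recurrence divides by (n+3)(n+2), so |c_n| R^n is bounded for every R. *)
Lemma coef_bounded A B R : 0 < R -> exists M, forall n, Rabs (coef A B n) * R ^ n <= M.
Proof.
  intros HR. set (q := fun n => Rabs (coef A B n) * R ^ n).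
  assert (Hq0 : forall n, 0 <= q n) by (intro n; apply Rmult_le_pos; [apply Rabs_pos| apply pow_le; lra]).
  set (K := Rabs A * R ^ 2 + Rabs B * R ^ 3).
  assert (HK : 0 <= K) by (unfold K; pose proof (Rabs_pos A); pose proof (Rabs_pos B);
                            pose proof (pow_le R 2); pose proof (pow_le R 3); nra).
  destruct (INR_archimed 1 K) as [N HN]; [lra|]. rewrite Rmult_1_r in HN.
  apply (bounded_of_window q N). intros n Hn.
  set (d := (INR n + 3) * (INR n + 2)).
  assert (Hd : K <= d) by (pose proof (le_INR _ _ Hn); pose proof (pos_INR n); unfold d; nra).
  set (m := Rmax (q n) (Rmax (q (S n)) (q (S (S n))))).
  assert (H1 : q n <= m) by apply Rmax_l.
  assert (H2 : q (S n) <= m) by (eapply Rle_trans; [apply Rmax_l| apply Rmax_r]).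
  (* |A c_(n+1) - B c_n| R^(n+3) <= |A| R^2 q(n+1) + |B| R^3 q(n) <= K m <= d m *)
  assert (Habs : Rabs (A * coef A B (S n) - B * coef A B n) * R ^ (S (S (S n)))
                 <= Rabs A * R ^ 2 * q (S n) + Rabs B * R ^ 3 * q n).
  { unfold q. eapply Rle_trans.
    - apply Rmult_le_compat_r; [apply pow_le; lra|]. unfold Rminus.
      eapply Rle_trans; [apply Rabs_triang|]. rewrite Rabs_Ropp, !Rabs_mult. apply Rle_refl.
    - simpl. right. ring. }
  assert (0 <= Rabs A * R ^ 2) by (apply Rmult_le_pos; [apply Rabs_pos| apply pow_le; lra]).
  assert (0 <= Rabs B * R ^ 3) by (apply Rmult_le_pos; [apply Rabs_pos| apply pow_le; lra]).
  assert (Hm : 0 <= m) by (eapply Rle_trans; [apply Hq0| exact H1]).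
  assert (Hdp : 0 < d) by (pose proof (pos_INR n); unfold d; nra).
  unfold q at 1. rewrite coef_rec. fold d.
  rewrite Rabs_div, (Rabs_right d) by lra.
  apply (Rmult_le_reg_r d); [lra|]. unfold Rdiv.
  replace (Rabs (A * coef A B (S n) - B * coef A B n) * / d * R ^ S (S (S n)) * d)
    with (Rabs (A * coef A B (S n) - B * coef A B n) * R ^ S (S (S n))) by (field; lra).
  unfold K in Hd. nra.
Qed.

Lemma coef_radius A B x : Rbar_lt (Rabs x) (CV_radius (coef A B)).
Proof.
  destruct (CV_radius_bounded (coef A B)) as [Hub _].
  assert (Hx := Rabs_pos x).
  destruct (coef_bounded A B (Rabs x + 1)) as [M HM]; [lra|].
  assert (H : Rbar_le (Rabs x + 1) (CV_radius (coef A B))).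
  { apply Hub. exists M. intro n. rewrite Rabs_mult.
    rewrite (Rabs_right ((Rabs x + 1) ^ n)); [apply HM| apply Rle_ge, pow_le; lra]. }
  destruct (CV_radius (coef A B)) as [r| |]; simpl in *; auto; lra.
Qed.

(* Coefficientwise, the recurrence says y'' = A y - B x y. *)
Lemma coef_ode A B x :
  PSeries (PS_derive (PS_derive (coef A B))) x = (A - B * x) * PSeries (coef A B) x.
Proof.
  assert (Hex : ex_pseries (coef A B) x) by apply CV_radius_inside, coef_radius.
  transitivity (PSeries (PS_minus (PS_scal A (coef A B)) (PS_scal B (PS_incr_1 (coef A B)))) x).
  - apply PSeries_ext. intro n. unfold PS_derive, PS_minus, PS_scal, PS_incr_1.
    unfold scal, plus, opp; simpl; unfold mult; simpl.
    destruct n as [|n].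
    + unfold coef; simpl. unfold zero; simpl. field.
    + rewrite coef_rec, !S_INR. field. pose proof (pos_INR n). lra.
  - rewrite PSeries_minus.
    + rewrite !PSeries_scal, PSeries_incr_1. ring.
    + apply ex_pseries_scal; [apply Rmult_comm| exact Hex].
    + apply ex_pseries_scal; [apply Rmult_comm| apply ex_pseries_incr_1; exact Hex].
Qed.

Definition ys A B x := PSeries (coef A B) x.
Definition ys1 A B x := PSeries (PS_derive (coef A B)) x.

Lemma ys_der A B x : is_derive (ys A B) x (ys1 A B x).
Proof. apply is_derive_PSeries, coef_radius. Qed.

Lemma ys1_der A B x : is_derive (ys1 A B) x ((A - B * x) * ys A B x).
Proof.
  unfold ys1, ys. rewrite <- coef_ode. apply is_derive_PSeries.
  rewrite CV_radius_derive. apply coef_radius.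
Qed.

Lemma ys_0 A B : ys A B 0 = 1.
Proof.
  unfold ys. rewrite PSeries_decr_1 by apply CV_radius_inside, coef_radius.
  rewrite Rmult_0_l, Rplus_0_r. reflexivity.
Qed.

Lemma ys1_0 A B : ys1 A B 0 = 0.
Proof.
  unfold ys1. rewrite PSeries_decr_1.
  - rewrite Rmult_0_l, Rplus_0_r. unfold PS_derive, coef. simpl. ring.
  - apply CV_radius_inside. rewrite CV_radius_derive. apply coef_radius.
Qed.

Section Spectral.
Variables tmin tmax alpha : R.
Hypothesis Htmin : 0 < tmin.
Hypothesis Htmm : tmin < tmax.
Hypothesis Halpha : 0 < alpha.

(** The shooting solution.  With  mu = lam c - r  the equation reads
    Q'' = pot mu lam th * Q;  [Y mu lam] is its solution with
    Y(tmin) = 1, Y'(tmin) = 0, and [Y1 mu lam] its derivative. *)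

Definition pot mu lam th := (mu - lam ^ 2 * th) / alpha.
Definition Y mu lam th :=
  ys ((mu - lam ^ 2 * tmin) / alpha) (lam ^ 2 / alpha) (th - tmin).
Definition Y1 mu lam th :=
  ys1 ((mu - lam ^ 2 * tmin) / alpha) (lam ^ 2 / alpha) (th - tmin).

Lemma Y_der mu lam th : is_derive (Y mu lam) th (Y1 mu lam th).
Proof.
  unfold Y, Y1.
  apply (is_derive_eq _ _ (scal 1 (ys1 ((mu - lam ^ 2 * tmin) / alpha) (lam ^ 2 / alpha) (th - tmin)))).
  - apply (is_derive_comp (ys _ _) (fun t => t - tmin)); [apply ys_der| auto_derive; auto].
  - apply Rmult_1_l.
Qed.

Lemma Y1_der mu lam th : is_derive (Y1 mu lam) th (pot mu lam th * Y mu lam th).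
Proof.
  unfold Y1. apply (is_derive_eq _ _ (scal 1 (((mu - lam ^ 2 * tmin) / alpha - lam ^ 2 / alpha * (th - tmin))
                                       * ys ((mu - lam ^ 2 * tmin) / alpha) (lam ^ 2 / alpha) (th - tmin)))).
  - apply (is_derive_comp (ys1 _ _) (fun t => t - tmin)); [apply ys1_der| auto_derive; auto].
  - etransitivity; [apply Rmult_1_l|]. unfold Y, pot. apply Rmult_eq_compat_r. field. lra.
Qed.

Lemma Y_tmin mu lam : Y mu lam tmin = 1.
Proof. unfold Y. rewrite Rminus_eq_0. apply ys_0. Qed.

Lemma Y1_tmin mu lam : Y1 mu lam tmin = 0.
Proof. unfold Y1. rewrite Rminus_eq_0. apply ys1_0. Qed.

Lemma Y_cont mu lam : cont_R (Y mu lam).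
Proof. intro th. eapply continuity_of_is_derive, Y_der. Qed.

Lemma Y1_cont mu lam : cont_R (Y1 mu lam).
Proof. intro th. eapply continuity_of_is_derive, Y1_der. Qed.

Lemma pot_der mu lam th : is_derive (pot mu lam) th (- lam ^ 2 / alpha).
Proof. unfold pot. auto_derive; auto. reqR. field. lra. Qed.

Lemma pot_cont mu lam : cont_R (pot mu lam).
Proof. intro th. eapply continuity_of_is_derive, pot_der. Qed.

Definition pot_max mu lam := (Rabs mu + lam ^ 2 * tmax) / alpha.

Lemma pot_max_ge0 mu lam : 0 <= pot_max mu lam.
Proof.
  unfold pot_max. apply Rdiv_le_0_compat; [|lra].
  pose proof (Rabs_pos mu); pose proof (pow2_ge_0 lam). nra.
Qed.

Lemma pot_bound mu lam th : tmin <= th <= tmax -> Rabs (pot mu lam th) <= pot_max mu lam.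
Proof.
  intros Hth. unfold pot, pot_max, Rdiv.
  rewrite Rabs_mult, (Rabs_right (/ alpha)) by (apply Rle_ge, Rlt_le, Rinv_0_lt_compat; lra).
  apply Rmult_le_compat_r; [apply Rlt_le, Rinv_0_lt_compat; lra|].
  unfold Rminus. eapply Rle_trans; [apply Rabs_triang|]. rewrite Rabs_Ropp.
  pose proof (pow2_ge_0 lam).
  rewrite (Rabs_right (lam ^ 2 * th)) by (apply Rle_ge, Rmult_le_pos; lra).
  apply Rplus_le_compat_l, Rmult_le_compat_l; lra.
Qed.

Lemma Y_energy mu lam th : tmin <= th <= tmax ->
  Y mu lam th * Y mu lam th + Y1 mu lam th * Y1 mu lam th
    <= exp ((2 + pot_max mu lam) * (tmax - tmin)).
Proof.
  intros Hth. pose proof (pot_max_ge0 mu lam) as HP.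
  eapply Rle_trans.
  - apply (energy_growth (Y mu lam) (Y1 mu lam) (pot mu lam) (fun _ => 0) (pot_max mu lam) tmin tmax)
      with (D := 0); auto using Y_der, Rle_refl.
    + intros; apply Y_cont.
    + intros; apply Y1_cont.
    + intros x _. rewrite Rplus_0_r. apply Y1_der.
    + intros x Hx. apply pot_bound. lra.
    + intros; lra.
  - rewrite Y_tmin, Y1_tmin. replace (1 * 1 + 0 * 0 + 0 / (2 + pot_max mu lam)) with 1 by (field; lra).
    rewrite Rmult_1_l. destruct (Req_dec th tmax) as [->|]; [lra|].
    left. apply exp_increasing. nra.
Qed.

(* Y never has a double zero to the right of tmin: backward energy decay
   would force Y(tmin) = 0. *)
Lemma Y_no_double_zero mu lam s : tmin < s <= tmax ->
  Y mu lam s = 0 -> Y1 mu lam s = 0 -> False.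
Proof.
  intros Hs HY HY1.
  assert (H := energy_decay (Y mu lam) (Y1 mu lam) (pot mu lam) (fun _ => 0) (pot_max mu lam) tmin s).
  specialize (H ltac:(intros; apply Y_cont) ltac:(intros; apply Y1_cont) ltac:(intros; apply Y_der)
                ltac:(intros; rewrite Rplus_0_r; apply Y1_der) ltac:(intros; apply pot_bound; lra)
                ltac:(reflexivity) tmin ltac:(lra)).
  rewrite Y_tmin, Y1_tmin, HY, HY1 in H.
  pose proof (exp_pos ((1 + pot_max mu lam) * tmin)). lra.
Qed.

Definition pot_near_max mu lam := (Rabs mu + 1 + (Rabs lam + 1) ^ 2 * tmax) / alpha.
Definition pot_lip lam := (1 + (2 * Rabs lam + 1) * tmax) / alpha.

Lemma pot_perturb mu lam mu' lam' d th : 0 <= d <= 1 ->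
  Rabs (mu' - mu) <= d -> Rabs (lam' - lam) <= d -> tmin <= th <= tmax ->
  Rabs (pot mu' lam' th) <= pot_near_max mu lam /\
  Rabs (pot mu' lam' th - pot mu lam th) <= d * pot_lip lam.
Proof.
  intros Hd Hmu Hlam Hth.
  assert (Hmu' : Rabs mu' <= Rabs mu + 1).
  { replace mu' with ((mu' - mu) + mu) by ring. eapply Rle_trans; [apply Rabs_triang|]. lra. }
  assert (Hlam' : Rabs lam' <= Rabs lam + 1).
  { replace lam' with ((lam' - lam) + lam) by ring. eapply Rle_trans; [apply Rabs_triang|]. lra. }
  assert (Hsum : Rabs (lam' + lam) <= 2 * Rabs lam + 1).
  { replace (lam' + lam) with ((lam' - lam) + 2 * lam) by ring.
    eapply Rle_trans; [apply Rabs_triang|]. rewrite Rabs_mult, (Rabs_right 2) by lra. lra. }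
  pose proof (Rabs_pos lam); pose proof (Rabs_pos (lam' + lam)); pose proof (Rabs_pos (lam' - lam)).
  split.
  - eapply Rle_trans; [apply pot_bound; exact Hth|].
    unfold pot_max, pot_near_max, Rdiv. apply Rmult_le_compat_r; [apply Rlt_le, Rinv_0_lt_compat; lra|].
    assert (lam' ^ 2 <= (Rabs lam + 1) ^ 2).
    { rewrite <- (pow2_abs lam'). apply pow_incr. split; [apply Rabs_pos| exact Hlam']. }
    nra.
  - unfold pot, pot_lip.
    replace ((mu' - lam' ^ 2 * th) / alpha - (mu - lam ^ 2 * th) / alpha)
      with (((mu' - mu) - (lam' - lam) * (lam' + lam) * th) / alpha) by (field; lra).
    unfold Rdiv. rewrite Rabs_mult, (Rabs_right (/ alpha)) by (apply Rle_ge, Rlt_le, Rinv_0_lt_compat; lra).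
    rewrite <- Rmult_assoc. apply Rmult_le_compat_r; [apply Rlt_le, Rinv_0_lt_compat; lra|].
    unfold Rminus at 1. eapply Rle_trans; [apply Rabs_triang|].
    rewrite Rabs_Ropp, !Rabs_mult, (Rabs_right th) by lra.
    assert (Rabs (lam' - lam) * Rabs (lam' + lam) <= d * (2 * Rabs lam + 1)) by (apply Rmult_le_compat; lra).
    assert (Rabs (lam' - lam) * Rabs (lam' + lam) * th <= d * (2 * Rabs lam + 1) * tmax).
    { apply Rmult_le_compat; try lra. apply Rmult_le_pos; lra. }
    nra.
Qed.

Lemma forcing_bound mu lam mu' lam' d t : 0 <= d <= 1 ->
  Rabs (mu' - mu) <= d -> Rabs (lam' - lam) <= d -> tmin <= t <= tmax ->
  (pot mu' lam' t - pot mu lam t) * Y mu lam t * ((pot mu' lam' t - pot mu lam t) * Y mu lam t)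
    <= d * pot_lip lam * (d * pot_lip lam) * exp ((2 + pot_max mu lam) * (tmax - tmin)).
Proof.
  intros Hd Hmu Hlam Ht.
  destruct (pot_perturb mu lam mu' lam' d t Hd Hmu Hlam Ht) as [_ Hq].
  pose proof (Y_energy mu lam t Ht) as HY.
  set (q := pot mu' lam' t - pot mu lam t) in *. set (y := Y mu lam t) in *.
  assert (Hq2 : q * q <= d * pot_lip lam * (d * pot_lip lam)).
  { replace (q * q) with (Rabs q * Rabs q) by (rewrite <- Rabs_mult; apply Rabs_right, Rle_ge, Rle_0_sqr).
    apply Rmult_le_compat; try apply Rabs_pos; lra. }
  pose proof (Rle_0_sqr (Y1 mu lam t)); unfold Rsqr in *.
  replace (q * y * (q * y)) with ((q * q) * (y * y)) by ring.
  apply Rmult_le_compat; [apply Rle_0_sqr| apply Rle_0_sqr| exact Hq2| lra].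
Qed.

(* The difference z = Y' - Y solves z'' = pot' z + (pot' - pot) Y with zero
   initial data, so its energy is O(d^2) for parameters d-close. *)
Lemma Y_diff_energy mu lam : exists G, 0 < G /\
  forall mu' lam' d, 0 <= d <= 1 -> Rabs (mu' - mu) <= d -> Rabs (lam' - lam) <= d ->
  forall th, tmin <= th <= tmax ->
    (Y mu' lam' th - Y mu lam th) * (Y mu' lam' th - Y mu lam th) +
    (Y1 mu' lam' th - Y1 mu lam th) * (Y1 mu' lam' th - Y1 mu lam th) <= d * d * G.
Proof.
  set (P := pot_near_max mu lam). set (C := pot_lip lam).
  set (Yb := exp ((2 + pot_max mu lam) * (tmax - tmin))).
  assert (HP : 0 <= P).
  { unfold P, pot_near_max. apply Rdiv_le_0_compat; [|lra].
    pose proof (Rabs_pos mu); pose proof (pow2_ge_0 (Rabs lam + 1)). nra. }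
  assert (HC : 0 < C) by (unfold C, pot_lip; pose proof (Rabs_pos lam); apply Rdiv_lt_0_compat; nra).
  assert (HYb : 0 < Yb) by apply exp_pos.
  exists (C * C * Yb / (2 + P) * exp ((2 + P) * (tmax - tmin))).
  split.
  { apply Rmult_lt_0_compat; [| apply exp_pos].
    apply Rdiv_lt_0_compat; [apply Rmult_lt_0_compat; [nra|lra]| lra]. }
  intros mu' lam' d Hd Hmu Hlam th Hth.
  assert (HE := energy_growth (fun t => Y mu' lam' t - Y mu lam t) (fun t => Y1 mu' lam' t - Y1 mu lam t)
                 (pot mu' lam') (fun t => (pot mu' lam' t - pot mu lam t) * Y mu lam t) P tmin tmax HP).
  specialize (HE ltac:(intros; apply continuity_pt_minus; apply Y_cont)
                 ltac:(intros; apply continuity_pt_minus; apply Y1_cont)).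
  specialize (HE ltac:(intros; apply (is_derive_minus (Y mu' lam') (Y mu lam)); apply Y_der)).
  specialize (HE ltac:(intros t _;
                 apply (is_derive_eq _ _ (pot mu' lam' t * Y mu' lam' t - pot mu lam t * Y mu lam t));
                 [apply (is_derive_minus (Y1 mu' lam') (Y1 mu lam)); apply Y1_der| cbv beta; reqR; ring])).
  specialize (HE ltac:(intros t Ht; apply (proj1 (pot_perturb mu lam mu' lam' d t Hd Hmu Hlam ltac:(lra))))).
  specialize (HE (d * C * (d * C) * Yb) ltac:(apply Rmult_le_pos; [apply Rle_0_sqr| lra])
                 ltac:(intros t Ht; apply forcing_bound; auto; lra) th Hth).
  cbv beta in HE. rewrite !Y_tmin, !Y1_tmin, !Rminus_eq_0, Rmult_0_l, !Rplus_0_l in HE.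
  eapply Rle_trans; [exact HE|].
  replace (d * d * (C * C * Yb / (2 + P) * exp ((2 + P) * (tmax - tmin))))
    with (d * C * (d * C) * Yb / (2 + P) * exp ((2 + P) * (tmax - tmin))) by (field; lra).
  apply Rmult_le_compat_l; [apply Rdiv_le_0_compat; [apply Rmult_le_pos; [apply Rle_0_sqr| lra]| lra]|].
  destruct (Req_dec th tmax) as [->|]; [lra|]. left; apply exp_increasing. nra.
Qed.

Lemma Y_cont_param mu lam e : 0 < e -> exists eta, 0 < eta /\
  forall mu' lam', Rabs (mu' - mu) < eta -> Rabs (lam' - lam) < eta ->
    forall th, tmin <= th <= tmax ->
      Rabs (Y mu' lam' th - Y mu lam th) < e /\ Rabs (Y1 mu' lam' th - Y1 mu lam th) < e.
Proof.
  intros He. destruct (Y_diff_energy mu lam) as [G [HG Hbound]].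
  destruct (small_tolerance G e HG He) as [eta [Heta Hsmall]].
  exists eta. split; [lra|]. intros mu' lam' Hmu Hlam th Hth.
  specialize (Hbound mu' lam' eta ltac:(lra) ltac:(lra) ltac:(lra) th Hth).
  set (z := Y mu' lam' th - Y mu lam th) in *. set (z1 := Y1 mu' lam' th - Y1 mu lam th) in *.
  pose proof (Rle_0_sqr z); pose proof (Rle_0_sqr z1); unfold Rsqr in *.
  split; apply Rabs_def1; nra.
Qed.

(** An eigenvalue is a mu for which Y is positive and
    satisfies the Neumann condition Y'(tmax) = 0; it is obtained as the
    infimum of the "overshooting" values, for which Y stays positive and
    ends with Y'(tmax) > 0. *)

Definition overshoot lam mu :=
  (forall th, tmin <= th <= tmax -> 0 < Y mu lam th) /\ 0 < Y1 mu lam tmax.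
Definition eigen lam mu :=
  (forall th, tmin <= th <= tmax -> 0 < Y mu lam th) /\ Y1 mu lam tmax = 0.

(* For mu large the potential is >= 1: Y Y' and Y^2 increase, so Y >= 1. *)
Lemma overshoot_large lam : overshoot lam (lam ^ 2 * tmax + alpha).
Proof.
  set (mu := lam ^ 2 * tmax + alpha).
  assert (Hp : forall th, tmin <= th <= tmax -> 1 <= pot mu lam th).
  { intros th Hth. unfold pot, mu. apply (Rmult_le_reg_r alpha); [lra|].
    unfold Rdiv. rewrite Rmult_assoc, Rinv_l, Rmult_1_r by lra.
    pose proof (pow2_ge_0 lam). nra. }
  set (V := fun t => Y mu lam t * Y1 mu lam t).
  set (dV := fun t => Y1 mu lam t * Y1 mu lam t + pot mu lam t * (Y mu lam t * Y mu lam t)).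
  assert (HdV : forall t, is_derive V t (dV t)).
  { intro t. unfold V, dV. pose proof (Y_der mu lam t); pose proof (Y1_der mu lam t). ader. ring. }
  assert (HVc : forall t, continuity_pt V t) by (intro t; eapply continuity_of_is_derive, HdV).
  assert (HV0 : V tmin = 0) by (unfold V; rewrite Y1_tmin; ring).
  assert (HdV0 : forall t, tmin < t < tmax -> 0 <= dV t).
  { intros t Ht. unfold dV. pose proof (Hp t ltac:(lra)).
    pose proof (Rle_0_sqr (Y1 mu lam t)); pose proof (Rle_0_sqr (Y mu lam t)). unfold Rsqr in *. nra. }
  assert (HVpos : forall x, tmin <= x <= tmax -> 0 <= V x).
  { intros x Hx. rewrite <- HV0. apply (nondecreasing_of_deriv V dV); auto; try lra.
    intros t Ht. apply HdV0. lra. }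
  assert (Hsq : forall x, tmin <= x <= tmax -> 1 <= Y mu lam x * Y mu lam x).
  { intros x Hx. replace 1 with (Y mu lam tmin * Y mu lam tmin) by (rewrite Y_tmin; ring).
    apply (nondecreasing_of_deriv (fun t => Y mu lam t * Y mu lam t) (fun t => 2 * V t)); try lra.
    - intros; apply continuity_pt_mult; apply Y_cont.
    - intros t _. unfold V. pose proof (Y_der mu lam t). ader. ring.
    - intros t Ht. pose proof (HVpos t ltac:(lra)). lra. }
  assert (HYpos : forall x, tmin <= x <= tmax -> 0 < Y mu lam x).
  { apply pos_of_no_zero; [apply Y_cont| rewrite Y_tmin; lra|].
    intros x Hx Hz. pose proof (Hsq x Hx). rewrite Hz in H. lra. }
  split; [exact HYpos|].
  assert (HVt : V tmin < V tmax).
  { apply (increasing_of_deriv V dV); auto.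
    intros t Ht. unfold dV. pose proof (Hp t ltac:(lra)). pose proof (HYpos t ltac:(lra)).
    pose proof (Rle_0_sqr (Y1 mu lam t)). unfold Rsqr in *. nra. }
  rewrite HV0 in HVt. unfold V in HVt. pose proof (HYpos tmax ltac:(lra)). nra.
Qed.

(* For mu <= lam^2 tmin the potential is <= 0 and Y' cannot become positive. *)
Lemma overshoot_lower lam mu : overshoot lam mu -> lam ^ 2 * tmin < mu.
Proof.
  intros [HY HY1]. destruct (Rlt_dec (lam ^ 2 * tmin) mu) as [|Hn]; [assumption|exfalso].
  assert (Y1 mu lam tmax <= Y1 mu lam tmin).
  { apply (nonincreasing_of_deriv (Y1 mu lam) (fun t => pot mu lam t * Y mu lam t)); try lra.
    - intros; apply Y1_cont.
    - intros; apply Y1_der.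
    - intros t Ht. pose proof (HY t ltac:(lra)). pose proof (pow2_ge_0 lam).
      assert (pot mu lam t <= 0).
      { unfold pot. apply Rmult_le_reg_r with alpha; [lra|]. unfold Rdiv.
        rewrite Rmult_assoc, Rinv_l, Rmult_1_r, Rmult_0_l by lra. nra. }
      nra. }
  rewrite Y1_tmin in H. lra.
Qed.

Lemma overshoot_open lam mu : overshoot lam mu -> exists mu', mu' < mu /\ overshoot lam mu'.
Proof.
  intros [HY HY1].
  destruct (continuity_ab_min (Y mu lam) tmin tmax ltac:(lra) (fun c _ => Y_cont mu lam c))
    as [xm [Hxm1 Hxm2]].
  pose proof (HY xm Hxm2) as Hm0.
  set (e := Rmin (Y mu lam xm) (Y1 mu lam tmax)).
  assert (He : 0 < e) by (apply Rmin_glb_lt; lra).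
  assert (He1 : e <= Y mu lam xm) by apply Rmin_l. assert (He2 : e <= Y1 mu lam tmax) by apply Rmin_r.
  destruct (Y_cont_param mu lam e He) as [eta [Heta Hc]].
  exists (mu - eta / 2). split; [lra|].
  assert (Hm : Rabs ((mu - eta / 2) - mu) < eta) by (rewrite Rabs_left; lra).
  assert (Hl : Rabs (lam - lam) < eta) by (rewrite Rminus_eq_0, Rabs_R0; lra).
  split.
  - intros th Hth. destruct (Hc _ _ Hm Hl th Hth) as [H1 _]. apply Rabs_def2 in H1.
    pose proof (Hxm1 th Hth). lra.
  - destruct (Hc _ _ Hm Hl tmax ltac:(lra)) as [_ H1]. apply Rabs_def2 in H1. lra.
Qed.

Lemma overshoot_limit lam ms :
  (forall e, 0 < e -> exists mu, overshoot lam mu /\ Rabs (mu - ms) < e) ->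
  (forall th, tmin <= th <= tmax -> 0 <= Y ms lam th) /\ 0 <= Y1 ms lam tmax.
Proof.
  intros Happrox.
  assert (Hall : forall e, 0 < e ->
            (forall th, tmin <= th <= tmax -> - e < Y ms lam th) /\ - e < Y1 ms lam tmax).
  { intros e He. destruct (Y_cont_param ms lam e He) as [eta [Heta Hc]].
    destruct (Happrox eta Heta) as [mu [[HT1 HT2] Hmu]].
    assert (Hl : Rabs (lam - lam) < eta) by (rewrite Rminus_eq_0, Rabs_R0; lra).
    split.
    - intros th Hth. destruct (Hc mu lam Hmu Hl th Hth) as [H1 _]. apply Rabs_def2 in H1.
      pose proof (HT1 th Hth). lra.
    - destruct (Hc mu lam Hmu Hl tmax ltac:(lra)) as [_ H1]. apply Rabs_def2 in H1. lra. }
  split.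
  - intros th Hth. destruct (Rle_dec 0 (Y ms lam th)) as [|Hn]; [assumption|exfalso].
    destruct (Hall (- Y ms lam th / 2) ltac:(lra)) as [H _]. specialize (H th Hth). lra.
  - destruct (Rle_dec 0 (Y1 ms lam tmax)) as [|Hn]; [assumption|exfalso].
    destruct (Hall (- Y1 ms lam tmax / 2) ltac:(lra)) as [_ H]. lra.
Qed.

(* A nonnegative Y cannot vanish to the right of tmin unless it has a double
   zero there (Fermat's rule), which is excluded. *)
Lemma Y_pos_of_nonneg mu lam :
  (forall th, tmin <= th <= tmax -> 0 <= Y mu lam th) -> 0 <= Y1 mu lam tmax ->
  forall th, tmin <= th <= tmax -> 0 < Y mu lam th.
Proof.
  intros HY HY1 th Hth. destruct (Rlt_dec 0 (Y mu lam th)) as [|Hn]; [assumption|exfalso].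
  assert (Hz : Y mu lam th = 0) by (pose proof (HY th Hth); lra).
  assert (Hmin : forall x, tmin <= x <= tmax -> Y mu lam th <= Y mu lam x) by (intros; rewrite Hz; auto).
  assert (Htht : tmin < th) by (destruct (Req_dec th tmin) as [->|]; [rewrite Y_tmin in Hz; lra| lra]).
  apply (Y_no_double_zero mu lam th); [lra| exact Hz|].
  destruct (Req_dec th tmax) as [->|Hne].
  - pose proof (deriv_at_right_min (Y mu lam) (Y1 mu lam) tmin tmax Htmm (Y_der mu lam)
                  (Y1_cont mu lam tmax) Hmin). lra.
  - apply (deriv_at_interior_min (Y mu lam) (Y1 mu lam) tmin tmax); auto using Y_der; lra.
Qed.

Lemma exists_eigen lam : exists mu, eigen lam mu.
Proof.
  destruct (exists_inf (overshoot lam) (lam ^ 2 * tmin)) as [ms [Hlow Happ]].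
  - exists (lam ^ 2 * tmax + alpha). apply overshoot_large.
  - intros mu Hmu. apply Rlt_le, overshoot_lower, Hmu.
  - destruct (overshoot_limit lam ms) as [HY HY1].
    { intros e He. destruct (Happ e He) as [mu [Hmu Hlt]]. exists mu. split; [exact Hmu|].
      pose proof (Hlow mu Hmu). rewrite Rabs_right; lra. }
    pose proof (Y_pos_of_nonneg ms lam HY HY1) as Hpos.
    exists ms. split; [exact Hpos|].
    destruct (Rle_lt_or_eq_dec 0 _ HY1) as [Hlt|Heq]; [exfalso| auto].
    destruct (overshoot_open lam ms (conj Hpos Hlt)) as [mu' [Hlt' Hmu']].
    pose proof (Hlow mu' Hmu'). lra.
Qed.

(* Wronskian identity: for two eigenpairs, W = Y1_1 Y_2 - Y_1 Y1_2 vanishes at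
   both ends and W' = (pot_1 - pot_2) Y_1 Y_2, so the latter has zero integral. *)
Lemma eigen_pair_identity lam1 mu1 lam2 mu2 : eigen lam1 mu1 -> eigen lam2 mu2 ->
  (mu1 - mu2) * RInt (fun t => Y mu1 lam1 t * Y mu2 lam2 t) tmin tmax =
  (lam1 ^ 2 - lam2 ^ 2) * RInt (fun t => t * (Y mu1 lam1 t * Y mu2 lam2 t)) tmin tmax.
Proof.
  intros [_ Z1] [_ Z2].
  apply (RInt_affine_zero _ _ _ alpha); [lra| apply cont_R_mult; apply Y_cont|].
  rewrite (RInt_ext _ (fun t => (pot mu1 lam1 t - pot mu2 lam2 t) * (Y mu1 lam1 t * Y mu2 lam2 t)))
    by (intros; unfold pot; reqR; field; lra).
  rewrite (RInt_deriv (fun t => Y1 mu1 lam1 t * Y mu2 lam2 t - Y mu1 lam1 t * Y1 mu2 lam2 t)).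
  - rewrite Z1, Z2, !Y1_tmin. reqR; ring.
  - intro x. pose proof (Y_der mu1 lam1 x); pose proof (Y_der mu2 lam2 x);
    pose proof (Y1_der mu1 lam1 x); pose proof (Y1_der mu2 lam2 x). ader. ring.
  - apply cont_R_mult; [apply cont_R_minus; apply pot_cont| apply cont_R_mult; apply Y_cont].
Qed.

(* Hence mu1 - mu2 = (lam1^2 - lam2^2) xi with xi a weighted mean of theta. *)
Lemma eigen_pair_mean lam1 mu1 lam2 mu2 : eigen lam1 mu1 -> eigen lam2 mu2 ->
  exists xi, tmin < xi < tmax /\ mu1 - mu2 = (lam1 ^ 2 - lam2 ^ 2) * xi.
Proof.
  intros H1 H2. pose proof (eigen_pair_identity _ _ _ _ H1 H2) as HP.
  destruct H1 as [P1 _], H2 as [P2 _].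
  assert (Hw := weighted_mean_bounds (fun t => Y mu1 lam1 t * Y mu2 lam2 t) tmin tmax Htmm).
  destruct Hw as [Hlo Hhi]; [apply cont_R_mult; apply Y_cont| |].
  { intros x Hx. apply Rmult_lt_0_compat; [apply P1|apply P2]; lra. }
  set (I0 := RInt (fun t => Y mu1 lam1 t * Y mu2 lam2 t) tmin tmax) in *.
  set (I1 := RInt (fun t => t * (Y mu1 lam1 t * Y mu2 lam2 t)) tmin tmax) in *.
  assert (HI0 : 0 < I0).
  { apply RInt_gt0; auto. apply cont_R_mult; apply Y_cont.
    intros x Hx. apply Rmult_lt_0_compat; [apply P1|apply P2]; lra. }
  exists (I1 / I0). split.
  - split; [apply lt_div_of_mul_lt| apply div_lt_of_lt_mul]; lra.
  - apply (Rmult_eq_reg_r I0); [| lra]. rewrite HP. field. lra.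
Qed.

Lemma eigen_unique lam mu1 mu2 : eigen lam mu1 -> eigen lam mu2 -> mu1 = mu2.
Proof.
  intros H1 H2. destruct (eigen_pair_mean _ _ _ _ H1 H2) as [xi [_ Hx]].
  rewrite Rminus_eq_0, Rmult_0_l in Hx. lra.
Qed.

Lemma pot_sign mu lam th : lam <> 0 ->
  (th < mu / lam ^ 2 -> 0 < pot mu lam th) /\ (mu / lam ^ 2 < th -> pot mu lam th < 0) /\
  (th <= mu / lam ^ 2 -> 0 <= pot mu lam th) /\ (mu / lam ^ 2 <= th -> pot mu lam th <= 0).
Proof.
  intros Hl. assert (Hl2 : 0 < lam ^ 2) by (apply pow2_gt_0; auto).
  assert (Hpot : pot mu lam th = lam ^ 2 / alpha * (mu / lam ^ 2 - th)) by (unfold pot; field; lra).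
  assert (Hk : 0 < lam ^ 2 / alpha) by (apply Rdiv_lt_0_compat; lra).
  rewrite Hpot. generalize (lam ^ 2 / alpha) Hk (mu / lam ^ 2). intros k Hk' th0.
  repeat split; intro; nra.
Qed.

Lemma eigen_curvature_sign lam mu t : lam <> 0 -> eigen lam mu -> tmin <= t <= tmax ->
  (t < mu / lam ^ 2 -> 0 < pot mu lam t * Y mu lam t) /\
  (mu / lam ^ 2 < t -> pot mu lam t * Y mu lam t < 0).
Proof.
  intros Hl [HP _] Ht. pose proof (HP t Ht). destruct (pot_sign mu lam t Hl) as [Hs1 [Hs2 _]].
  split; intro Hth; [apply Rmult_lt_0_compat; auto| pose proof (Hs2 Hth); nra].
Qed.

(* theta0 lies inside: otherwise Y' would be strictly monotone between its two zeros. *)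
Lemma eigen_turning_point lam mu : lam <> 0 -> eigen lam mu -> tmin < mu / lam ^ 2 < tmax.
Proof.
  intros Hl He. pose proof (eigen_curvature_sign lam mu) as Hs. pose proof He as [_ HZ].
  split.
  - destruct (Rlt_dec tmin (mu / lam ^ 2)) as [|Hn]; [assumption|exfalso].
    assert (Y1 mu lam tmax < Y1 mu lam tmin).
    { apply (decreasing_of_deriv (Y1 mu lam) (fun t => pot mu lam t * Y mu lam t));
        auto using Y1_der; [intros; apply Y1_cont|].
      intros t Ht. apply (proj2 (Hs t Hl He ltac:(lra))); lra. }
    rewrite Y1_tmin in H. lra.
  - destruct (Rlt_dec (mu / lam ^ 2) tmax) as [|Hn]; [assumption|exfalso].
    assert (Y1 mu lam tmin < Y1 mu lam tmax).
    { apply (increasing_of_deriv (Y1 mu lam) (fun t => pot mu lam t * Y mu lam t));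
        auto using Y1_der; [intros; apply Y1_cont|].
      intros t Ht. apply (proj1 (Hs t Hl He ltac:(lra))); lra. }
    rewrite Y1_tmin in H. lra.
Qed.

(* Y' increases from 0 up to theta0 and decreases back to 0 after it. *)
Lemma eigen_slope_pos lam mu : lam <> 0 -> eigen lam mu ->
  forall x, tmin < x < tmax -> 0 < Y1 mu lam x.
Proof.
  intros Hl He x Hx. pose proof (eigen_curvature_sign lam mu) as Hs.
  pose proof He as [_ HZ]. destruct (Rle_dec x (mu / lam ^ 2)) as [Hle|Hgt].
  - rewrite <- (Y1_tmin mu lam).
    apply (increasing_of_deriv (Y1 mu lam) (fun t => pot mu lam t * Y mu lam t)); auto using Y1_der; try lra.
    + intros; apply Y1_cont.
    + intros t Ht. apply (proj1 (Hs t Hl He ltac:(lra))); lra.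
  - rewrite <- HZ.
    apply (decreasing_of_deriv (Y1 mu lam) (fun t => pot mu lam t * Y mu lam t)); auto using Y1_der; try lra.
    + intros; apply Y1_cont.
    + intros t Ht. apply (proj2 (Hs t Hl He ltac:(lra))); lra.
Qed.

Lemma eigen_increasing lam mu : lam <> 0 -> eigen lam mu ->
  forall x y, tmin <= x -> x < y -> y <= tmax -> Y mu lam x < Y mu lam y.
Proof.
  intros Hl He x y Hx Hxy Hy. apply (increasing_of_deriv (Y mu lam) (Y1 mu lam)); auto using Y_der.
  - intros; apply Y_cont.
  - intros t Ht. apply (eigen_slope_pos lam mu Hl He). lra.
Qed.

Lemma eigen_convex lam mu : lam <> 0 -> eigen lam mu ->
  convex_on (Y mu lam) tmin (mu / lam ^ 2) /\ concave_on (Y mu lam) (mu / lam ^ 2) tmax.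
Proof.
  intros Hl He. destruct (eigen_turning_point lam mu Hl He) as [H1 H2]. destruct He as [HP _].
  split.
  - apply (convex_of_deriv _ (Y1 mu lam)); [apply Y_der|].
    intros x y Hx Hxy Hy.
    apply (nondecreasing_of_deriv (Y1 mu lam) (fun t => pot mu lam t * Y mu lam t)); auto.
    + intros; apply Y1_cont.
    + intros; apply Y1_der.
    + intros t Ht. apply Rmult_le_pos; [apply (pot_sign mu lam t Hl); lra| left; apply HP; lra].
  - apply (concave_of_deriv _ (Y1 mu lam)); [apply Y_der|].
    intros x y Hx Hxy Hy.
    apply (nonincreasing_of_deriv (Y1 mu lam) (fun t => pot mu lam t * Y mu lam t)); auto.
    + intros; apply Y1_cont.
    + intros; apply Y1_der.
    + intros t Ht. pose proof (proj2 (proj2 (proj2 (pot_sign mu lam t Hl))) ltac:(lra)).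
      pose proof (HP t ltac:(lra)). nra.
Qed.

(* Integrating Y'' = pot Y against the Neumann conditions: mu <Y> = lam^2 <theta Y>. *)
Lemma eigen_mean lam mu : eigen lam mu ->
  mu * RInt (Y mu lam) tmin tmax = lam ^ 2 * RInt (fun t => t * Y mu lam t) tmin tmax.
Proof.
  intros [_ HZ]. apply (RInt_affine_zero _ _ _ alpha); [lra| apply Y_cont|].
  rewrite (RInt_deriv (Y1 mu lam)); [rewrite HZ, Y1_tmin; reqR; ring| apply Y1_der|].
  apply cont_R_mult; [apply pot_cont| apply Y_cont].
Qed.

Section Normalized.
Variable r : R.
Hypothesis Hr : 0 < r.
Variable muf : R -> R.
Hypothesis muf_eigen : forall lam, eigen lam (muf lam).

Definition norm_const lam := RInt (Y (muf lam) lam) tmin tmax.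
Definition cf lam := (muf lam + r) / lam.
Definition Qf lam th := Y (muf lam) lam th / norm_const lam.
Definition meanf lam := RInt (fun th => th * Qf lam th) tmin tmax.

Lemma Yf_pos lam th : tmin <= th <= tmax -> 0 < Y (muf lam) lam th.
Proof. apply (proj1 (muf_eigen lam)). Qed.

Lemma norm_const_pos lam : 0 < norm_const lam.
Proof. apply RInt_gt0; auto using Y_cont. intros; apply Yf_pos; lra. Qed.

Lemma Qf_cont lam : cont_R (Qf lam).
Proof.
  intro x. apply (continuity_pt_div _ (fun _ => norm_const lam)); [apply Y_cont| apply cont_R_const|].
  pose proof (norm_const_pos lam). lra.
Qed.

Lemma spectral_exists lam : 0 < lam -> spectral_solution alpha r tmin tmax lam (cf lam) (Qf lam).
Proof.
  intros Hl. pose proof (norm_const_pos lam) as HN. set (N := norm_const lam) in *. set (mu := muf lam).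
  assert (Hcont2 : cont_R (fun t => pot mu lam t * Y mu lam t / N)).
  { intro x. apply (continuity_pt_div _ (fun _ => N)); [| apply cont_R_const| lra].
    apply continuity_pt_mult; [apply pot_cont| apply Y_cont]. }
  exists (fun t => Y1 mu lam t / N), (fun t => pot mu lam t * Y mu lam t / N).
  split; [|split; [|split; [|split; [|split]]]].
  - split; [|split; [|split; [|split]]]; try apply cont_on_closed_of_cont_R; auto using Qf_cont.
    + intro x. apply (continuity_pt_div _ (fun _ => N)); [apply Y1_cont| apply cont_R_const| lra].
    + intros x _. apply is_derive_Reals. unfold Qf. fold N.
      pose proof (Y_der mu lam x). ader. reqR. field. lra.
    + intros x _. apply is_derive_Reals. pose proof (Y1_der mu lam x). ader. reqR. field. lra.
  - intros th _. unfold Qf, cf, pot. fold N mu. field. lra.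
  - rewrite Y1_tmin. unfold Rdiv; ring.
  - unfold mu; rewrite (proj2 (muf_eigen lam)). unfold Rdiv; ring.
  - intros th Hth. unfold Qf. apply Rdiv_lt_0_compat; [apply Yf_pos; lra| exact HN].
  - destruct (RiemannInt_of_cont (Qf lam) tmin tmax (Qf_cont lam)) as [pr Hpr].
    exists pr. rewrite Hpr. unfold Qf. rewrite RInt_div by (apply ex_RInt_cont, Y_cont).
    change (RInt (Y (muf lam) lam) tmin tmax) with (norm_const lam). field. apply Rgt_not_eq, norm_const_pos.
Qed.

(* Any solution is a positive multiple of the shooting solution for
   mu = lam c - r, which is therefore an eigenvalue (uniqueness for the
   initial value problem, applied to the clamped extensions). *)
Lemma solution_is_eigen lam c' Q' : spectral_solution alpha r tmin tmax lam c' Q' ->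
  eigen lam (lam * c' - r) /\
  forall th, tmin <= th <= tmax -> Q' th = Q' tmin * Y (lam * c' - r) lam th.
Proof.
  intros [Q1 [Q2 [[HcQ [HcQ1 [_ [HdQ HdQ1]]]] [Hode [Ha [Hb [Hpos _]]]]]]].
  set (mu := lam * c' - r). set (k := Q' tmin). set (cl := clamp tmin tmax).
  assert (Hcl : forall x, tmin <= x <= tmax -> cl x = x) by (intros; apply clamp_in; auto).
  assert (HQ2 : forall x, tmin < x < tmax -> Q2 x = pot mu lam x * Q' x).
  { intros x Hx. specialize (Hode x Hx). unfold pot, mu.
    apply (Rmult_eq_reg_l alpha); [|lra].
    replace (alpha * ((lam * c' - r - lam ^ 2 * x) / alpha * Q' x))
      with ((lam * c' - r - lam ^ 2 * x) * Q' x) by (field; lra). lra. }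
  (* v = Q' - k Y vanishes with its derivative at tmin *)
  set (v := fun x => Q' (cl x) - k * Y mu lam x).
  set (v1 := fun x => Q1 (cl x) - k * Y1 mu lam x).
  assert (Hv : forall x, tmin <= x <= tmax -> v x = 0 /\ v1 x = 0).
  { apply (ivp_zero v v1 (pot mu lam) (pot_max mu lam) tmin tmax (pot_max_ge0 mu lam)).
    - intros x Hx. apply continuity_pt_minus; [apply clamp_cont; auto|].
      apply continuity_pt_mult; [apply cont_R_const| apply Y_cont].
    - intros x Hx. apply continuity_pt_minus; [apply clamp_cont; auto|].
      apply continuity_pt_mult; [apply cont_R_const| apply Y1_cont].
    - intros x Hx. unfold v, v1. rewrite (Hcl x) by lra.
      apply (is_derive_minus (fun t => Q' (cl t))); [apply clamp_der; auto|].
      apply (is_derive_scal (Y mu lam)), Y_der.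
    - intros x Hx. unfold v, v1. rewrite (Hcl x) by lra.
      apply (is_derive_eq _ _ (Q2 x - k * (pot mu lam x * Y mu lam x)));
        [| unfold v; rewrite HQ2 by lra; reqR; ring].
      apply (is_derive_minus (fun t => Q1 (cl t))); [apply clamp_der; auto|].
      apply (is_derive_scal (Y1 mu lam)), Y1_der.
    - intros x Hx. apply pot_bound. lra.
    - unfold v. rewrite (Hcl tmin), Y_tmin by lra. unfold k. ring.
    - unfold v1. rewrite (Hcl tmin), Y1_tmin, Ha by lra. ring. }
  assert (HQk : forall x, tmin <= x <= tmax -> Q' x = k * Y mu lam x).
  { intros x Hx. destruct (Hv x Hx) as [H _]. unfold v in H. rewrite (Hcl x Hx) in H. lra. }
  assert (Hk : 0 < k) by (apply Hpos; lra).
  split; [split|exact HQk].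
  - intros th Hth. pose proof (Hpos th Hth). rewrite HQk in H by exact Hth.
    apply (Rmult_lt_reg_l k); lra.
  - destruct (Hv tmax ltac:(lra)) as [_ H]. unfold v1 in H. rewrite (Hcl tmax), Hb in H by lra.
    apply (Rmult_eq_reg_l k); lra.
Qed.

Lemma spectral_unique lam c' Q' : 0 < lam -> spectral_solution alpha r tmin tmax lam c' Q' ->
  c' = cf lam /\ (forall th, tmin <= th <= tmax -> Q' th = Qf lam th).
Proof.
  intros Hl HS. destruct (solution_is_eigen lam c' Q' HS) as [He HQ].
  assert (Hmu : lam * c' - r = muf lam) by (apply (eigen_unique lam); auto).
  rewrite Hmu in HQ.
  destruct HS as [_ [_ [_ [_ [_ [_ [_ [pr Hint]]]]]]]].
  assert (Hk : Q' tmin * norm_const lam = 1).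
  { rewrite <- Hint, <- RInt_Reals. unfold norm_const.
    rewrite <- RInt_scal_l by (apply ex_RInt_cont, Y_cont).
    apply RInt_ext. intros x Hx.
    rewrite Rmin_left, Rmax_right in Hx by lra. symmetry. apply HQ. lra. }
  pose proof (norm_const_pos lam).
  split.
  - unfold cf. rewrite <- Hmu. field. lra.
  - intros th Hth. rewrite HQ by exact Hth. unfold Qf.
    replace (Q' tmin) with (/ norm_const lam)
      by (apply (Rmult_eq_reg_r (norm_const lam)); [rewrite Rinv_l|]; lra).
    field. lra.
Qed.

(* By the Wronskian identity, mu(lam) - mu(lam0) = (lam^2 - lam0^2) xi with xi < tmax. *)
Lemma muf_lip lam lam0 : Rabs (muf lam - muf lam0) <= Rabs (lam ^ 2 - lam0 ^ 2) * tmax.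
Proof.
  destruct (eigen_pair_mean lam (muf lam) lam0 (muf lam0) (muf_eigen lam) (muf_eigen lam0))
    as [xi [Hxi E]].
  rewrite E, Rabs_mult. apply Rmult_le_compat_l; [apply Rabs_pos|]. rewrite Rabs_right; lra.
Qed.

(* mu is locally Lipschitz in lam, hence continuous. *)
Lemma muf_close lam0 e : 0 < e ->
  exists d, 0 < d /\ forall lam, Rabs (lam - lam0) < d -> Rabs (muf lam - muf lam0) < e.
Proof.
  intros He.
  set (C := (2 * Rabs lam0 + 1) * tmax + 1).
  assert (HC : 0 < C) by (unfold C; pose proof (Rabs_pos lam0); nra).
  exists (Rmin 1 (e / C)). split; [apply Rmin_glb_lt; [lra| apply Rdiv_lt_0_compat; lra]|].
  intros lam Hl. assert (Hd1 := Rmin_l 1 (e / C)). assert (Hd2 := Rmin_r 1 (e / C)).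
  assert (Hdc : Rmin 1 (e / C) * C <= e).
  { apply (Rmult_le_compat_r C) in Hd2; [|lra]. unfold Rdiv in Hd2.
    rewrite Rmult_assoc, Rinv_l, Rmult_1_r in Hd2 by lra. exact Hd2. }
  eapply Rle_lt_trans; [apply muf_lip|].
  replace (lam ^ 2 - lam0 ^ 2) with ((lam - lam0) * (lam + lam0)) by ring.
  rewrite Rabs_mult.
  assert (Hs : Rabs (lam + lam0) <= 2 * Rabs lam0 + 1).
  { replace (lam + lam0) with ((lam - lam0) + 2 * lam0) by ring.
    eapply Rle_trans; [apply Rabs_triang|]. rewrite Rabs_mult, (Rabs_right 2) by lra. lra. }
  pose proof (Rabs_pos (lam - lam0)); pose proof (Rabs_pos (lam + lam0)).
  assert (Rabs (lam - lam0) * Rabs (lam + lam0) <= Rabs (lam - lam0) * (2 * Rabs lam0 + 1))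
    by (apply Rmult_le_compat_l; lra).
  assert (Rabs (lam - lam0) * C < Rmin 1 (e / C) * C) by (apply Rmult_lt_compat_r; lra).
  unfold C in *. nra.
Qed.

Lemma cf_cont lam0 : 0 < lam0 -> continuity_pt cf lam0.
Proof.
  intros Hl. apply (continuity_pt_div (fun l => muf l + r) (fun l => l)); [| apply cont_R_id| lra].
  apply continuity_pt_plus; [apply continuity_pt_of_eps, muf_close| apply cont_R_const].
Qed.

(* Since tmin < muf lam / lam^2 < tmax:  lam tmin + r/lam < c(lam) < lam tmax + r/lam. *)
Lemma cf_bounds lam : 0 < lam -> lam * tmin + r / lam < cf lam < lam * tmax + r / lam.
Proof.
  intros Hl. destruct (eigen_turning_point lam (muf lam) ltac:(lra) (muf_eigen lam)) as [H1 H2].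
  unfold cf. replace ((muf lam + r) / lam) with (lam * (muf lam / lam ^ 2) + r / lam) by (field; lra).
  split; apply Rplus_lt_compat_r; apply Rmult_lt_compat_l; lra.
Qed.

Lemma cf_pos lam : 0 < lam -> 0 < cf lam.
Proof.
  intros Hl. pose proof (cf_bounds lam Hl).
  assert (0 < lam * tmin) by (apply Rmult_lt_0_compat; lra).
  assert (0 < r / lam) by (apply Rdiv_lt_0_compat; lra). lra.
Qed.

(* c is continuous and tends to +oo at 0 and at +oo, so it attains its minimum;
   the minimum is searched on [lo, hi], outside which c exceeds c(1). *)
Lemma cf_has_min : exists ls, 0 < ls /\ forall lam, 0 < lam -> cf ls <= cf lam.
Proof.
  set (lo := r / (r + tmax)). set (hi := (r + tmax) / tmin).
  assert (Hlo : 0 < lo < 1).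
  { unfold lo. split; [apply Rdiv_lt_0_compat; lra|]. apply (Rmult_lt_reg_r (r + tmax)); [lra|].
    unfold Rdiv. rewrite Rmult_assoc, Rinv_l by lra. lra. }
  assert (Hhi : 1 < hi).
  { unfold hi. apply (Rmult_lt_reg_r tmin); [lra|]. unfold Rdiv. rewrite Rmult_assoc, Rinv_l by lra. lra. }
  destruct (continuity_ab_min cf lo hi ltac:(lra)) as [ls [Hmin Hls]].
  { intros c Hc. apply cf_cont. lra. }
  exists ls. split; [lra|].
  assert (Hc1 : cf 1 < r + tmax) by (pose proof (cf_bounds 1 ltac:(lra)); unfold Rdiv in H; lra).
  assert (Hls1 : cf ls < r + tmax) by (pose proof (Hmin 1 ltac:(lra)); lra).
  intros lam Hl. pose proof (cf_bounds lam Hl).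
  assert (0 < r / lam) by (apply Rdiv_lt_0_compat; lra).
  assert (0 < lam * tmin) by (apply Rmult_lt_0_compat; lra).
  destruct (Rle_dec lo lam) as [Hlo'|Hlo']; [destruct (Rle_dec lam hi) as [Hhi'|Hhi']|].
  - apply Hmin. lra.
  - (* lam > hi: c(lam) > lam tmin > r + tmax *)
    assert (hi * tmin < lam * tmin) by (apply Rmult_lt_compat_r; lra).
    assert (hi * tmin = r + tmax) by (unfold hi; field; lra). lra.
  - (* lam < lo: c(lam) > r / lam > r + tmax *)
    assert (r + tmax < r / lam).
    { apply (Rmult_lt_reg_r lam); [lra|]. unfold Rdiv. rewrite Rmult_assoc, Rinv_l, Rmult_1_r by lra.
      assert (lam * (r + tmax) < lo * (r + tmax)) by (apply Rmult_lt_compat_r; lra).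
      assert (lo * (r + tmax) = r) by (unfold lo; field; lra). lra. }
    lra.
Qed.

Lemma part_i lam : 0 < lam ->
  (forall x y, tmin < x -> x < y -> y < tmax -> Qf lam x < Qf lam y) /\
  (exists th0, tmin <= th0 <= tmax /\
     - lam * cf lam + lam ^ 2 * th0 + r = 0 /\
     convex_on (Qf lam) tmin th0 /\ concave_on (Qf lam) th0 tmax).
Proof.
  intros Hl. assert (Hl0 : lam <> 0) by lra. pose proof (norm_const_pos lam) as HN.
  destruct (eigen_turning_point lam (muf lam) Hl0 (muf_eigen lam)) as [H1 H2].
  pose proof (eigen_increasing lam (muf lam) Hl0 (muf_eigen lam)) as Hinc.
  destruct (eigen_convex lam (muf lam) Hl0 (muf_eigen lam)) as [Hcv Hcc].
  split.
  - intros x y Hx Hxy Hy. unfold Qf, Rdiv. apply Rmult_lt_compat_r; [apply Rinv_0_lt_compat, HN|].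
    apply Hinc; lra.
  - exists (muf lam / lam ^ 2). split; [lra|]. split.
    + unfold cf. field. lra.
    + split; [apply convex_on_div| apply concave_on_div]; auto.
Qed.

Lemma meanf_eq lam : meanf lam = RInt (fun t => t * Y (muf lam) lam t) tmin tmax / norm_const lam.
Proof.
  unfold meanf, Qf. rewrite <- RInt_div by (apply ex_RInt_cont, cont_R_mult; [apply cont_R_id| apply Y_cont]).
  apply RInt_ext. intros; reqR; unfold Rdiv; ring.
Qed.

Lemma meanf_is lam : mean_is (Qf lam) tmin tmax (meanf lam).
Proof. apply RiemannInt_of_cont, cont_R_mult; [apply cont_R_id| apply Qf_cont]. Qed.

Lemma meanf_gt lam : 0 < lam -> meanf lam > (tmax + tmin) / 2.
Proof.
  intros Hl. pose proof (norm_const_pos lam) as HN.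
  pose proof (eigen_increasing lam (muf lam) ltac:(lra) (muf_eigen lam)) as Hinc.
  pose proof (mean_gt_midpoint (Y (muf lam) lam) tmin tmax Htmm (Y_cont _ _) Hinc) as H.
  rewrite meanf_eq. apply Rlt_gt, lt_div_of_mul_lt; [exact HN|].
  unfold norm_const. lra.
Qed.

Lemma meanf_speed lam : 0 < lam -> - lam * cf lam + lam ^ 2 * meanf lam + r = 0.
Proof.
  intros Hl. pose proof (eigen_mean lam (muf lam) (muf_eigen lam)) as HM.
  pose proof (norm_const_pos lam) as HN. rewrite meanf_eq. unfold cf, norm_const in *.
  replace (lam ^ 2 * (RInt (fun t => t * Y (muf lam) lam t) tmin tmax / RInt (Y (muf lam) lam) tmin tmax))
    with (muf lam * RInt (Y (muf lam) lam) tmin tmax / RInt (Y (muf lam) lam) tmin tmax)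
    by (rewrite HM; field; lra).
  field. lra.
Qed.

Lemma RInt_Y_cont (G : R -> R) lam0 : cont_R G ->
  continuity_pt (fun lam => RInt (fun t => G t * Y (muf lam) lam t) tmin tmax) lam0.
Proof.
  intros HG. apply continuity_pt_of_eps. intros e He.
  destruct (continuity_ab_maj (fun x => Rabs (G x)) tmin tmax ltac:(lra)) as [Mx [HMx _]].
  { intros c _. apply (continuity_pt_comp G Rabs); [apply HG| apply Rcontinuity_abs]. }
  set (B := Rabs (G Mx) + 1).
  assert (HB : 0 < B) by (unfold B; pose proof (Rabs_pos (G Mx)); lra).
  assert (HGB : forall t, tmin <= t <= tmax -> Rabs (G t) <= B)
    by (intros t Ht; pose proof (HMx t Ht); unfold B; lra).
  (* Y_lam is within e' of Y_lam0 uniformly once lam and muf lam are close *)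
  set (e' := e / (2 * (tmax - tmin) * B)).
  assert (He' : 0 < e') by (unfold e'; apply Rdiv_lt_0_compat; [lra| apply Rmult_lt_0_compat; lra]).
  destruct (Y_cont_param (muf lam0) lam0 e' He') as [eta [Heta Hc]].
  destruct (muf_close lam0 eta Heta) as [d1 [Hd1 Hmc]].
  exists (Rmin d1 eta). split; [apply Rmin_glb_lt; lra|].
  intros lam Hl. assert (H1 := Rmin_l d1 eta). assert (H2 := Rmin_r d1 eta).
  specialize (Hc (muf lam) lam (Hmc lam ltac:(lra)) ltac:(lra)).
  eapply Rle_lt_trans.
  - apply (RInt_close _ _ _ _ (B * e')); [lra| apply cont_R_mult; auto using Y_cont..|].
    intros t Ht. rewrite <- Rmult_minus_distr_l, Rabs_mult.
    destruct (Hc t Ht) as [Hc1 _]. apply Rmult_le_compat; auto using Rabs_pos; lra.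
  - replace ((tmax - tmin) * (B * e')) with (e / 2) by (unfold e'; field; lra). lra.
Qed.

Section MinimalSpeed.
Variable ls : R.
Hypothesis ls_pos : 0 < ls.
Hypothesis ls_min : forall lam, 0 < lam -> cf ls <= cf lam.

Definition overlap lam := RInt (fun t => Y (muf ls) ls t * Y (muf lam) lam t) tmin tmax.
Definition moment lam := RInt (fun t => (t * Y (muf ls) ls t) * Y (muf lam) lam t) tmin tmax.

Lemma overlap_pos lam : 0 < overlap lam.
Proof.
  apply RInt_gt0; auto. apply cont_R_mult; apply Y_cont.
  intros x Hx. apply Rmult_lt_0_compat; apply Yf_pos; lra.
Qed.

(* Minimality, compared with lam < ls through the pair identity. *)
Lemma moment_bound_left lam : 0 < lam < ls -> (ls + lam) * moment lam <= cf ls * overlap lam.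
Proof.
  intros Hl. pose proof (overlap_pos lam) as H0.
  pose proof (eigen_pair_identity ls (muf ls) lam (muf lam) (muf_eigen ls) (muf_eigen lam)) as HP.
  rewrite (RInt_ext (fun t => t * _) (fun t => (t * Y (muf ls) ls t) * Y (muf lam) lam t)) in HP
    by (intros; reqR; ring).
  fold (overlap lam) (moment lam) in HP.
  (* muf ls - muf lam <= (ls - lam) c*,  since lam c* <= lam c(lam) = muf lam + r *)
  assert (Hd : muf ls - muf lam <= (ls - lam) * cf ls).
  { pose proof (ls_min lam ltac:(lra)) as Hm. unfold cf in *.
    apply (Rmult_le_compat_l lam) in Hm; [|lra].
    replace (lam * ((muf lam + r) / lam)) with (muf lam + r) in Hm by (field; lra).
    replace ((ls - lam) * ((muf ls + r) / ls)) with (muf ls + r - lam * ((muf ls + r) / ls)) by (field; lra).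
    lra. }
  apply (Rmult_le_reg_l (ls - lam)); [lra|].
  replace ((ls - lam) * ((ls + lam) * moment lam)) with ((ls ^ 2 - lam ^ 2) * moment lam) by ring.
  rewrite <- HP. replace ((ls - lam) * (cf ls * overlap lam)) with ((ls - lam) * cf ls * overlap lam) by ring.
  apply Rmult_le_compat_r; lra.
Qed.

(* Letting lam increase to ls (a one-sided Hellmann-Feynman inequality). *)
Lemma moment_bound : 2 * ls * moment ls <= cf ls * overlap ls.
Proof.
  set (F := fun lam => (ls + lam) * moment lam - cf ls * overlap lam).
  assert (HF : F ls <= 0).
  { apply (nonpos_of_left_nonpos F ls ls); [| exact ls_pos|].
    - unfold F. apply continuity_pt_minus; apply continuity_pt_mult.
      + apply continuity_pt_plus; [apply cont_R_const| apply cont_R_id].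
      + apply (RInt_Y_cont (fun t => t * Y (muf ls) ls t)), cont_R_mult; [apply cont_R_id| apply Y_cont].
      + apply cont_R_const.
      + apply RInt_Y_cont, Y_cont.
    - intros lam Hl. unfold F. pose proof (moment_bound_left lam ltac:(lra)). lra. }
  unfold F in HF. lra.
Qed.

(* With m* = meanf ls:  c* > 2 ls m*, then (ii) and strict AM-GM. *)
Lemma part_iii : cf ls > 2 * sqrt (r * meanf ls) /\ cf ls >= ls * (tmax + tmin).
Proof.
  pose proof (eigen_increasing ls (muf ls) ltac:(lra) (muf_eigen ls)) as Hinc.
  assert (Hsq := mean_sq_gt_mean (Y (muf ls) ls) tmin tmax Htmm (Y_cont _ _) Hinc (Yf_pos ls)).
  rewrite (RInt_ext (fun t => t * (Y (muf ls) ls t * Y (muf ls) ls t))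
                    (fun t => (t * Y (muf ls) ls t) * Y (muf ls) ls t)) in Hsq by (intros; reqR; ring).
  fold (moment ls) in Hsq. fold (overlap ls) in Hsq. fold (norm_const ls) in Hsq. rewrite <- meanf_eq in Hsq.
  pose proof moment_bound as Hmb. pose proof (overlap_pos ls) as H0.
  pose proof (meanf_gt ls ls_pos) as Hmid.
  assert (Hgt : cf ls > 2 * ls * meanf ls).
  { apply Rlt_gt, (Rmult_lt_reg_r (overlap ls)); [exact H0|].
    assert (ls * (meanf ls * overlap ls) < ls * moment ls) by (apply Rmult_lt_compat_l; lra). nra. }
  split.
  - apply (speed_gt_sqrt _ ls); auto using meanf_speed; lra.
  - nra.
Qed.

End MinimalSpeed.

End Normalized.

End Spectral.

Theorem proposition2p1 (tmin tmax alpha r : R)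
  (Htmin : 0 < tmin) (Htmm : tmin < tmax) (Halpha : 0 < alpha) (Hr : 0 < r) :
  exists (c : R -> R) (Q : R -> R -> R),
    (* existence *)
    (forall lam, 0 < lam -> spectral_solution alpha r tmin tmax lam (c lam) (Q lam)) /\
    (* uniqueness *)
    (forall lam c' Q', 0 < lam -> spectral_solution alpha r tmin tmax lam c' Q' ->
        c' = c lam /\ (forall th, tmin <= th <= tmax -> Q' th = Q lam th)) /\
    (* minimum c* = c lam* > 0 attained at lam* > 0, with properties (i)-(iii) *)
    (exists lamstar, 0 < lamstar /\ 0 < c lamstar /\
       (forall lam, 0 < lam -> c lamstar <= c lam) /\
       (* (i) *)
       (forall lam, 0 < lam ->
          (forall x y, tmin < x -> x < y -> y < tmax -> Q lam x < Q lam y) /\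
          (exists th0, tmin <= th0 <= tmax /\
             - lam * c lam + lam ^ 2 * th0 + r = 0 /\
             convex_on (Q lam) tmin th0 /\ concave_on (Q lam) th0 tmax)) /\
       (* (ii) *)
       (forall lam, 0 < lam ->
          exists m, mean_is (Q lam) tmin tmax m /\
            - lam * c lam + lam ^ 2 * m + r = 0 /\ m > (tmax + tmin) / 2) /\
       (* (iii) *)
       (exists mstar, mean_is (Q lamstar) tmin tmax mstar /\
          c lamstar > 2 * sqrt (r * mstar) /\
          c lamstar >= lamstar * (tmax + tmin))).
Proof.
  destruct (functional_choice (eigen tmin tmax alpha) (exists_eigen tmin tmax alpha Htmin Htmm Halpha))
    as [muf Hmu].
  exists (cf r muf), (Qf tmin tmax alpha muf).
  split; [intros lam Hl; eapply spectral_exists; eauto|].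
  split; [intros lam c' Q' Hl HS; eapply spectral_unique; eauto|].
  destruct (cf_has_min tmin tmax alpha Htmin Htmm Halpha r Hr muf Hmu) as [ls [Hls Hmin]].
  exists ls. split; [exact Hls|]. split; [apply (cf_pos tmin tmax alpha); auto|]. split; [exact Hmin|].
  split; [intros lam Hl; eapply part_i; eauto|].
  split.
  - intros lam Hl. exists (meanf tmin tmax alpha muf lam).
    split; [|split]; [eapply meanf_is| eapply meanf_speed| eapply meanf_gt]; eauto.
  - exists (meanf tmin tmax alpha muf ls). split; [eapply meanf_is; eauto|].
    eapply part_iii; eauto.
Qed.
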